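(* For $A\in\mathsf{T^*A}$ and a $*$-subalgebra $S\subseteq A$, let $c^*_A(S)$ denote the closure of $S$ in the $*$-representation topology $\mathcal T_A$. Then: (a) $c^*=K^\alpha=K^\eta$, i.e. for every $A\in\mathsf{T^*A}$ and every $*$-subalgebra $S\subseteq A$, $$c^*_A(S)=\alpha_A^{-1}\big(\overline{\alpha_A(S)}^{\,PC^*(A)}\big)=\eta_A^{-1}\big(\overline{\eta_A(S)}^{\,\overline{PC^*}(A)}\big);$$ (b) $c^*$ is finitely productive: $c^*_{A\times B}(S\times T)=c^*_A(S)\times c^*_B(T)$ for $*$-subalgebras $S\subseteq A$, $T\subseteq B$; (c) $A\in\mathsf{T^*A}$ is $c^*$-separated (the diagonal $\Delta_A$ satisfies $c^*_{A\times A}(\Delta_A)=\Delta_A$) if and only if $\alpha_A$ is injective, if and only if $A_R=0$; in particular every algebra in $\mathsf{P^*A}$ is $c^*$-separated; (d) $A\in\mathsf{T^*A}$ is $c^*$-compact in $\mathsf{T^*A}$ if and only if $PC^*(A)$ is $K$-compact in $\mathsf{P^*A}$; and in this case $\eta_A$ is surjective.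
   Context: A $*$-algebra is a complex algebra with an involution $a\mapsto a^*$ satisfying $(a+\lambda b)^*=a^*+\bar\lambda b^*$ and $(ab)^*=b^*a^*$. A topological $*$-algebra is a $*$-algebra with a topology making addition, multiplication, additive inverse and involution jointly continuous; $\mathsf{T^*A}$ is the category of topological $*$-algebras and continuous $*$-homomorphisms; its subobjects are $*$-subalgebras with the subspace topology. A $C^*$-seminorm on $A$ is a seminorm $p$ with $p(ab)\le p(a)p(b)$ and $p(a^*a)=p(a)^2$. $\mathcal N(A)$ is the set of continuous $C^*$-seminorms on $A$, directed pointwise. For $p\in\mathcal N(A)$, $A_p$ is the completion of $A/\ker p$ with respect to the $C^*$-norm induced by $p$. $\mathcal T_A$ (the $*$-representation topology) is the initial topology on $A$ induced by the seminorms in $\mathcal N(A)$, and $A_R=\bigcap_{p\in\mathcal N(A)}\ker p$ is the reducing ideal. $\overline{PC^*}(A)=\lim_{p\in\mathcal N(A)}A_p$ (limit in $\mathsf{T^*A}$, connecting maps $A_q\to A_p$ for $q\ge p$), and $\eta_A:A\to\overline{PC^*}(A)$, $\eta_A(x)=(x+\ker p)_p$. $PC^*(A)=\eta_A(A)$ with the subspace topology from $\overline{PC^*}(A)$, and $\alpha_A:A\to PC^*(A)$ is $\eta_A$ with restricted codomain. $\mathsf{P^*A}$ is the full subcategory of $\mathsf{T^*A}$ of algebras $A$ with $A_R=0$ whose topology equals $\mathcal T_A$; $A\mapsto PC^*(A)$ is a reflector onto it with reflection $\alpha_A$. $K$ denotes the Kuratowski (topological) closure of $*$-subalgebras. $A\in\mathsf{T^*A}$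 is $c^*$-compact in $\mathsf{T^*A}$ if for every $B\in\mathsf{T^*A}$ and every $*$-subalgebra $S\subseteq A\times B$, $\pi_B(c^*_{A\times B}(S))=c^*_B(\pi_B(S))$; $P\in\mathsf{P^*A}$ is $K$-compact in $\mathsf{P^*A}$ if for every $B\in\mathsf{P^*A}$ and every $*$-subalgebra $S\subseteq P\times B$, $\pi_B(\overline S)=\overline{\pi_B(S)}$. *)

From mathcomp Require Import all_boot all_order all_algebra.
From mathcomp Require Import all_classical all_reals all_analysis.
From mathcomp Require Import Rstruct Rstruct_topology complex.
Set Implicit Arguments. Unset Strict Implicit. Unset Printing Implicit Defensive.
Import Order.TTheory GRing.Theory Num.Theory numFieldNormedType.Exports.
Local Open Scope classical_set_scope.
Local Open Scope ring_scope.

Notation RR := Rdefinitions.R.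
Notation CC := (complex RR).
Definition cnorm (l : CC) : RR := Normc.normc l.
Definition cconj (l : CC) : CC := conjc l.

Record raw := Raw {
  car :> Type;
  rzero : car;
  radd : car -> car -> car;
  ropp : car -> car;
  rscal : CC -> car -> car;
  rmul : car -> car -> car;
  rstar : car -> car;
  ropen : (car -> Prop) -> Prop }.

Arguments rzero {r}. Arguments radd {r}. Arguments ropp {r}.
Arguments rscal {r}. Arguments rmul {r}. Arguments rstar {r}.

Definition rsub (A : raw) (x y : A) : A := radd x (ropp y).

Definition is_star_alg (A : raw) : Prop :=
  (forall x y z : A, radd x (radd y z) = radd (radd x y) z) /\
  (forall x y : A, radd x y = radd y x) /\
  (forall x : A, radd rzero x = x) /\
  (forall x : A, radd x (ropp x) = rzero) /\
  (forall (l : CC) (x y : A), rscal l (radd x y) = radd (rscal l x) (rscal l y)) /\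
  (forall (l m : CC) (x : A), rscal (l + m) x = radd (rscal l x) (rscal m x)) /\
  (forall (l m : CC) (x : A), rscal (l * m) x = rscal l (rscal m x)) /\
  (forall x : A, rscal 1 x = x) /\
  (forall x y z : A, rmul x (rmul y z) = rmul (rmul x y) z) /\
  (forall x y z : A, rmul x (radd y z) = radd (rmul x y) (rmul x z)) /\
  (forall x y z : A, rmul (radd x y) z = radd (rmul x z) (rmul y z)) /\
  (forall (l : CC) (x y : A), rscal l (rmul x y) = rmul (rscal l x) y) /\
  (forall (l : CC) (x y : A), rscal l (rmul x y) = rmul x (rscal l y)) /\
  (forall x : A, rstar (rstar x) = x) /\
  (forall x y : A, rstar (radd x y) = radd (rstar x) (rstar y)) /\
  (forall (l : CC) (x : A), rstar (rscal l x) = rscal (cconj l) (rstar x)) /\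
  (forall x y : A, rstar (rmul x y) = rmul (rstar y) (rstar x)).

Definition is_topology (T : Type) (op : (T -> Prop) -> Prop) : Prop :=
  op (fun _ => True) /\ op (fun _ => False) /\
  (forall U V, op U -> op V -> op (fun x => U x /\ V x)) /\
  (forall F : (T -> Prop) -> Prop, (forall U, F U -> op U) ->
     op (fun x => exists U, F U /\ U x)).

Definition prod_open (X Y : Type) (opX : (X -> Prop) -> Prop)
  (opY : (Y -> Prop) -> Prop) (W : X * Y -> Prop) : Prop :=
  forall z, W z -> exists U V, opX U /\ opY V /\ U z.1 /\ V z.2 /\
    (forall a b, U a -> V b -> W (a, b)).

Definition cont1 (X Y : Type) (opX : (X -> Prop) -> Prop)
  (opY : (Y -> Prop) -> Prop) (f : X -> Y) : Prop :=
  forall W, opY W -> opX (fun x => W (f x)).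

Definition cont2 (X Y Z : Type) (opX : (X -> Prop) -> Prop)
  (opY : (Y -> Prop) -> Prop) (opZ : (Z -> Prop) -> Prop) (f : X -> Y -> Z) :=
  forall W, opZ W -> prod_open opX opY (fun z => W (f z.1 z.2)).

Definition is_tsa (A : raw) : Prop :=
  is_star_alg A /\ is_topology (@ropen A) /\
  cont2 (@ropen A) (@ropen A) (@ropen A) radd /\
  cont2 (@ropen A) (@ropen A) (@ropen A) rmul /\
  cont1 (@ropen A) (@ropen A) ropp /\
  cont1 (@ropen A) (@ropen A) rstar.

Definition is_ssub (A : raw) (S : A -> Prop) : Prop :=
  S rzero /\ (forall x y, S x -> S y -> S (radd x y)) /\
  (forall l x, S x -> S (rscal l x)) /\
  (forall x y, S x -> S y -> S (rmul x y)) /\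
  (forall x, S x -> S (rstar x)).

Definition prod_raw (A B : raw) : raw :=
  @Raw (A * B)%type (rzero, rzero)
    (fun z w => (radd z.1 w.1, radd z.2 w.2))
    (fun z => (ropp z.1, ropp z.2))
    (fun l z => (rscal l z.1, rscal l z.2))
    (fun z w => (rmul z.1 w.1, rmul z.2 w.2))
    (fun z => (rstar z.1, rstar z.2))
    (prod_open (@ropen A) (@ropen B)).

Definition closure_of (T : Type) (op : (T -> Prop) -> Prop) (S : T -> Prop)
  (x : T) : Prop :=
  forall U, op U -> U x -> exists y, U y /\ S y.

Definition is_cstar_seminorm (A : raw) (p : A -> RR) : Prop :=
  (forall x y : A, p (radd x y) <= p x + p y) /\
  (forall (l : CC) (x : A), p (rscal l x) = cnorm l * p x) /\
  (forall x y : A, p (rmul x y) <= p x * p y) /\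
  (forall x : A, p (rmul (rstar x) x) = p x ^+ 2).

Definition cont_real (A : raw) (p : A -> RR) : Prop :=
  forall (x : A) (e : RR), 0 < e ->
    exists U, @ropen A U /\ U x /\ forall y, U y -> `|p y - p x| < e.

Definition NA (A : raw) (p : A -> RR) : Prop :=
  is_cstar_seminorm p /\ cont_real p.

Definition star_open (A : raw) (U : A -> Prop) : Prop :=
  forall x, U x -> exists (ps : list (A -> RR)) (e : RR), 0 < e /\
    (forall p, List.In p ps -> NA p) /\
    (forall y, (forall p, List.In p ps -> p (rsub y x) < e) -> U y).

Definition cstar (A : raw) (S : A -> Prop) : A -> Prop :=
  closure_of (@star_open A) S.

Definition reducing (A : raw) (x : A) : Prop := forall p, NA p -> p x = 0.

(* \overline{PC^*}(A) = lim_p A_p.  An element of A_p (completion of     *)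
(* A/ker p) is represented by a p-Cauchy sequence in A; an element of    *)
(* the limit by a compatible family of such, indexed by p in N(A).       *)
Definition fam (A : raw) := (A -> RR) -> nat -> A.

Definition pcauchy (A : raw) (p : A -> RR) (u : nat -> A) : Prop :=
  forall e : RR, 0 < e -> exists N, forall m n, (N <= m)%N -> (N <= n)%N ->
    p (rsub (u m) (u n)) < e.

(* [u] = 0 in A_p *)
Definition pnull (A : raw) (p : A -> RR) (u : nat -> A) : Prop :=
  (fun n => p (u n)) @ \oo --> (0 : RR).

Definition in_lim (A : raw) (u : fam A) : Prop :=
  (forall p, NA p -> pcauchy p (u p)) /\
  (forall p q, NA p -> NA q -> (forall a, p a <= q a) ->
     pnull p (fun n => rsub (u q n) (u p n))).

Definition lim_eq (A : raw) (u v : fam A) : Prop :=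
  forall p, NA p -> pnull p (fun n => rsub (u p n) (v p n)).

(* the C*-norm of A_p applied to [u] - [v] *)
Definition cdist (A : raw) (p : A -> RR) (u v : nat -> A) : RR :=
  limn (fun n => p (rsub (u n) (v n))).

(* open sets of the limit (subspace topology of the product topology) *)
Definition lim_open (A : raw) (U : fam A -> Prop) : Prop :=
  forall u, in_lim u -> U u -> exists (ps : list (A -> RR)) (e : RR), 0 < e /\
    (forall p, List.In p ps -> NA p) /\
    (forall v, in_lim v -> (forall p, List.In p ps -> cdist p (v p) (u p) < e) ->
       U v).

Definition lim_closure (A : raw) (X : fam A -> Prop) (u : fam A) : Prop :=
  in_lim u /\
  forall U, lim_open U -> U u -> exists v, in_lim v /\ U v /\ X v.

Definition eta (A : raw) (x : A) : fam A := fun _ _ => x.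

Definition eta_image (A : raw) (S : A -> Prop) : fam A -> Prop :=
  fun v => in_lim v /\ exists s, S s /\ lim_eq v (eta s).

Definition K_eta (A : raw) (S : A -> Prop) : A -> Prop :=
  fun x => lim_closure (eta_image S) (eta x).

Definition eta_surjective (A : raw) : Prop :=
  forall u : fam A, in_lim u -> exists x : A, lim_eq u (eta x).

(* PC^*(A) = eta(A): its points are the points eta(x) of the limit,   *)
(* i.e. classes {v in limit | v = eta x in the limit}.                  *)
Definition pc_class (A : raw) (x : A) : fam A -> Prop :=
  fun v => in_lim v /\ lim_eq v (eta x).

Definition pc_car (A : raw) := {X : fam A -> Prop | exists x : A, X = pc_class x}.

Definition alpha (A : raw) (x : A) : pc_car A :=
  exist _ (pc_class x) (ex_intro _ x erefl).

Definition pc_rep (A : raw) (X : pc_car A) : A := projT1 (cid (proj2_sig X)).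

Definition pc_open (A : raw) (V : pc_car A -> Prop) : Prop :=
  exists U, lim_open U /\ forall X, V X <-> exists v, proj1_sig X v /\ U v.

(* PC^*(A) with the operations inherited from the limit and the subspace topology *)
Definition PC (A : raw) : raw :=
  @Raw (pc_car A) (alpha rzero)
    (fun X Y => alpha (radd (pc_rep X) (pc_rep Y)))
    (fun X => alpha (ropp (pc_rep X)))
    (fun l X => alpha (rscal l (pc_rep X)))
    (fun X Y => alpha (rmul (pc_rep X) (pc_rep Y)))
    (fun X => alpha (rstar (pc_rep X)))
    (@pc_open A).

Definition K_alpha (A : raw) (S : A -> Prop) : A -> Prop :=
  fun x => closure_of (@pc_open A) (fun X => exists s, S s /\ X = alpha s) (alpha x).

Definition in_PstarA (B : raw) : Prop :=
  (forall x : B, reducing x -> x = rzero) /\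
  (forall U, @ropen B U <-> star_open U).

Definition cstar_separated (A : raw) : Prop :=
  forall z : prod_raw A A,
    cstar (fun w : prod_raw A A => w.1 = w.2) z <-> z.1 = z.2.

Definition cstar_compact (A : raw) : Prop :=
  forall B : raw, is_tsa B -> forall S : prod_raw A B -> Prop,
    is_ssub S -> forall b : B,
    (exists a : A, cstar S ((a, b) : prod_raw A B)) <->
    cstar (fun b' : B => exists a : A, S ((a, b') : prod_raw A B)) b.

Definition K_compact (P : raw) : Prop :=
  forall B : raw, is_tsa B -> in_PstarA B -> forall S : prod_raw P B -> Prop,
    is_ssub S -> forall b : B,
    (exists a : P, closure_of (@ropen (prod_raw P B)) S ((a, b) : prod_raw P B)) <->
    closure_of (@ropen B) (fun b' : B => exists a : P, S ((a, b') : prod_raw P B)) b.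

From mathcomp Require Import all_boot all_order all_algebra.
From mathcomp Require Import all_classical all_reals all_analysis.
From mathcomp Require Import Rstruct Rstruct_topology complex.
From mathcomp Require Import lra.
Set Implicit Arguments. Unset Strict Implicit. Unset Printing Implicit Defensive.
Import Order.TTheory GRing.Theory Num.Theory numFieldNormedType.Exports.
Local Open Scope classical_set_scope. Local Open Scope ring_scope.

(* The *-representation topology T_A is generated by N(A), and N(A) is directed under
   pointwise max, so x lies in c*_A(S) iff every single p in N(A) sees points of S
   arbitrarily close to x.  Each p in N(A) factors through alpha_A and eta_A, and the
   seminorms p o rep generate both the subspace topology of PC*(A) and its own
   *-representation topology; closures in PC*(A) and in the limit therefore pull back to
   c*_A, which gives (a), and PC*(A) lies in P*A.  Products are handled with the seminorms
   q(a, 0) and q(0, b) of a q in N(A x B), giving (b), and (x, y) is in the c*-closure of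
   the diagonal iff x - y lies in A_R, giving (c).  For (d), *-subalgebras are pulled back
   along alpha x id and pushed forward along alpha x alpha to transfer compactness, and
   eta_A is shown surjective by applying c*-compactness to the graph of the diagonal map
   from A into the algebra of families of p-Cauchy sequences, p in N(A). *)


Lemma list_pos_min (T : Type) (ps : list T) (P : T -> RR -> Prop) :
  (forall p d d', 0 < d' -> d' <= d -> P p d -> P p d') ->
  (forall p, List.In p ps -> exists2 d, 0 < d & P p d) ->
  exists2 d, 0 < d & forall p, List.In p ps -> P p d.
Proof.
move=> P_anti; elim: ps => [|a ps IH] hps; first by exists 1.
have [d1 d1_gt0 Pd1] := hps a (or_introl erefl).
have [d2 d2_gt0 Pd2] := IH (fun p hp => hps p (or_intror hp)).
have d_gt0 : 0 < Order.min d1 d2 by rewrite lt_min d1_gt0 d2_gt0.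
exists (Order.min d1 d2) => // p [<-|hp].
  by apply: P_anti Pd1 => //; rewrite ge_min lexx.
by apply: P_anti (Pd2 p hp) => //; rewrite ge_min lexx orbT.
Qed.

Lemma list_gap (T : Type) (ps : list T) (f : T -> RR) (e : RR) :
  (forall p, List.In p ps -> f p < e) ->
  exists2 d, 0 < d & forall p, List.In p ps -> f p + d <= e.
Proof.
move=> hps; apply: list_pos_min => [p d d' _ d'd|p hp]; first lra.
by exists (e - f p); have := hps p hp; lra.
Qed.

Lemma list_preimage (T U : Type) (P : T -> Prop) (f : T -> U) (Ns : list U) :
  (forall N, List.In N Ns -> exists2 p, P p & N = f p) ->
  exists2 ps, (forall p, List.In p ps -> P p) & Ns = List.map f ps.
Proof.
elim: Ns => [|N Ns IH] hNs; first by exists nil.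
have [ps Pps ->] := IH (fun M hM => hNs M (or_intror hM)).
have [p Pp ->] := hNs N (or_introl erefl).
by exists (p :: ps) => // q [<-|]; [|apply: Pps].
Qed.

Lemma small_factor (c e : RR) : 0 <= c -> 0 < e -> exists2 d, 0 < d & d * (c + d) < e.
Proof.
move=> c_ge0 e_gt0; have k_gt0 : 0 < c + e + 1 by lra.
exists (e / (c + e + 1)); first exact: divr_gt0.
have : e / (c + e + 1) * (c + e + 1) = e by rewrite mulfVK ?gt_eqF.
have : 0 < e / (c + e + 1) by apply: divr_gt0.
set d := e / _ => d_gt0 de; nra.
Qed.

Lemma dist_max_lt (a b c d e : RR) : `|a - c| < e -> `|b - d| < e ->
  `|Num.max a b - Num.max c d| < e.
Proof.
rewrite !ltr_norml => /andP[h1 h2] /andP[h3 h4].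
have [ab|ab] := leP a b; have [cd|cd] := leP c d;
  rewrite ?(max_r ab) ?(max_r cd) ?(max_l (ltW ab)) ?(max_l (ltW cd));
  apply/andP; split; lra.
Qed.

Lemma closure_of_ext (T : Type) (op1 op2 : (T -> Prop) -> Prop) (S : T -> Prop) (x : T) :
  (forall U, op1 U <-> op2 U) -> closure_of op1 S x <-> closure_of op2 S x.
Proof. by move=> op12; split=> clSx U /op12; apply: clSx. Qed.

Lemma closure_of_mono (T : Type) (op : (T -> Prop) -> Prop) (S1 S2 : T -> Prop) (x : T) :
  (forall y, S1 y -> S2 y) -> closure_of op S1 x -> closure_of op S2 x.
Proof. by move=> S12 clS1 U openU Ux; have [y [Uy /S12]] := clS1 U openU Ux; exists y. Qed.

Lemma cvgn_cauchy (a : nat -> RR) :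
  (forall e : RR, 0 < e ->
    exists N, forall m n, (N <= m)%N -> (N <= n)%N -> `|a m - a n| < e) -> cvgn a.
Proof.
move=> a_cauchy; apply: (@cauchy_cvg _ (a @ \oo : set_system RR^o)).
apply/cauchy_exP => e /a_cauchy[N aN].
by exists (a N); exists N => // n /= Nn; rewrite /ball /= distrC; apply: aN.
Qed.

Lemma cvgn_lim (a : nat -> RR) (l : RR) : a @ \oo --> l -> limn a = l.
Proof. by move=> al; apply: cvg_lim => //; exact: (@norm_hausdorff RR RR^o). Qed.

Lemma cvg_dist_bound (a b : nat -> RR) (c : RR) :
  b @ \oo --> (0 : RR) -> (forall n, `|a n - c| <= b n) -> a @ \oo --> c.
Proof.
move=> /(@cvgrPdist_lt _ RR^o) b0 ab; apply/(@cvgrPdist_lt _ RR^o) => e /b0.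
apply: filterS => n; rewrite sub0r normrN distrC; apply: le_lt_trans.
exact: le_trans (ab n) (ler_norm _).
Qed.

Lemma cvgnD (a b : nat -> RR) (l m : RR) : a @ \oo --> l -> b @ \oo --> m ->
  (fun n => a n + b n) @ \oo --> l + m.
Proof. by move=> al bm; apply: (@cvgD _ RR^o _ _ _ a b l m al bm). Qed.

Lemma cvgnM (a b : nat -> RR) (l m : RR) : a @ \oo --> l -> b @ \oo --> m ->
  (fun n => a n * b n) @ \oo --> l * m.
Proof. by move=> al bm; apply: (cvgM al bm). Qed.

Lemma cvgn_le (a b : nat -> RR) (l m : RR) N : a @ \oo --> l -> b @ \oo --> m ->
  (forall n, (N <= n)%N -> a n <= b n) -> l <= m.
Proof.
move=> al bm ab; apply: ler_cvg_to al bm _; near=> n; apply: ab; near: n.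
by exists N.
Unshelve. all: end_near. Qed.

(** * Complex *-algebras *)

Section StarAlgebra.
Variables (A : raw) (H : is_star_alg A).
Implicit Types x y z : A.

Lemma raddA x y z : radd x (radd y z) = radd (radd x y) z.
Proof. by move: H; rewrite /is_star_alg; intuition. Qed.
Lemma raddC x y : radd x y = radd y x.
Proof. by move: H; rewrite /is_star_alg; intuition. Qed.
Lemma radd0 x : radd rzero x = x.
Proof. by move: H; rewrite /is_star_alg; intuition. Qed.
Lemma raddN x : radd x (ropp x) = rzero.
Proof. by move: H; rewrite /is_star_alg; intuition. Qed.
Lemma rscalDr l x y : rscal l (radd x y) = radd (rscal l x) (rscal l y).
Proof. by move: H; rewrite /is_star_alg; intuition. Qed.
Lemma rscalDl l m x : rscal (l + m) x = radd (rscal l x) (rscal m x).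
Proof. by move: H; rewrite /is_star_alg; intuition. Qed.
Lemma rscalA l m x : rscal (l * m) x = rscal l (rscal m x).
Proof. by move: H; rewrite /is_star_alg; intuition. Qed.
Lemma rscal1 x : rscal 1 x = x.
Proof. by move: H; rewrite /is_star_alg; intuition. Qed.
Lemma rmulA x y z : rmul x (rmul y z) = rmul (rmul x y) z.
Proof. by move: H; rewrite /is_star_alg; intuition. Qed.
Lemma rmulDr x y z : rmul x (radd y z) = radd (rmul x y) (rmul x z).
Proof. by move: H; rewrite /is_star_alg; intuition. Qed.
Lemma rmulDl x y z : rmul (radd x y) z = radd (rmul x z) (rmul y z).
Proof. by move: H; rewrite /is_star_alg; intuition. Qed.
Lemma rscalAl l x y : rscal l (rmul x y) = rmul (rscal l x) y.
Proof. by move: H; rewrite /is_star_alg; intuition. Qed.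
Lemma rscalAr l x y : rscal l (rmul x y) = rmul x (rscal l y).
Proof. by move: H; rewrite /is_star_alg; intuition. Qed.
Lemma rstarK x : rstar (rstar x) = x.
Proof. by move: H; rewrite /is_star_alg; intuition. Qed.
Lemma rstarD x y : rstar (radd x y) = radd (rstar x) (rstar y).
Proof. by move: H; rewrite /is_star_alg; intuition. Qed.
Lemma rstarZ l x : rstar (rscal l x) = rscal (cconj l) (rstar x).
Proof. by move: H; rewrite /is_star_alg; intuition. Qed.
Lemma rstarM x y : rstar (rmul x y) = rmul (rstar y) (rstar x).
Proof. by move: H; rewrite /is_star_alg; intuition. Qed.

Lemma raddr0 x : radd x rzero = x.
Proof. by rewrite raddC radd0. Qed.
Lemma raddNl x : radd (ropp x) x = rzero.
Proof. by rewrite raddC raddN. Qed.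
Lemma raddKl x y : radd (ropp x) (radd x y) = y.
Proof. by rewrite raddA raddNl radd0. Qed.
Lemma raddI x y z : radd x y = radd x z -> y = z.
Proof. by move=> e; rewrite -(raddKl x y) e raddKl. Qed.
Lemma radd_idem x : radd x x = x -> x = rzero.
Proof. by move=> e; apply: (@raddI x); rewrite e raddr0. Qed.
Lemma ropp_uniq x y : radd x y = rzero -> y = ropp x.
Proof. by move=> e; apply: (@raddI x); rewrite e raddN. Qed.
Lemma roppK x : ropp (ropp x) = x.
Proof. by symmetry; apply: ropp_uniq; rewrite raddNl. Qed.
Lemma ropp0 : ropp (@rzero A) = rzero.
Proof. by symmetry; apply: ropp_uniq; rewrite radd0. Qed.
Lemma raddACA x y z t : radd (radd x y) (radd z t) = radd (radd x z) (radd y t).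
Proof. by rewrite -!raddA; congr (radd x _); rewrite !raddA [radd y z]raddC. Qed.
Lemma roppD x y : ropp (radd x y) = radd (ropp x) (ropp y).
Proof. by symmetry; apply: ropp_uniq; rewrite raddACA !raddN radd0. Qed.

Lemma rscal0 x : rscal 0 x = rzero.
Proof. by apply: radd_idem; rewrite -rscalDl addr0. Qed.
Lemma rscalr0 l : rscal l (@rzero A) = rzero.
Proof. by apply: radd_idem; rewrite -rscalDr raddr0. Qed.
Lemma rscalN1 x : rscal (-1) x = ropp x.
Proof. by apply: ropp_uniq; rewrite -{1}(rscal1 x) -rscalDl subrr rscal0. Qed.
Lemma rscalN l x : rscal l (ropp x) = ropp (rscal l x).
Proof. by rewrite -!rscalN1 -!rscalA mulrC. Qed.
Lemma rmul0 x : rmul rzero x = rzero.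
Proof. by apply: radd_idem; rewrite -rmulDl raddr0. Qed.
Lemma rmulNl x y : rmul (ropp x) y = ropp (rmul x y).
Proof. by rewrite -!rscalN1 rscalAl. Qed.
Lemma rmulNr x y : rmul x (ropp y) = ropp (rmul x y).
Proof. by rewrite -!rscalN1 rscalAr. Qed.
Lemma rstar0 : rstar (@rzero A) = rzero.
Proof. by apply: radd_idem; rewrite -rstarD raddr0. Qed.
Lemma rstarN x : rstar (ropp x) = ropp (rstar x).
Proof. by apply: ropp_uniq; rewrite -rstarD raddN rstar0. Qed.

Lemma rsub0 x : rsub x rzero = x.
Proof. by rewrite /rsub ropp0 raddr0. Qed.
Lemma rsubrr x : rsub x x = rzero.
Proof. exact: raddN. Qed.
Lemma rsubK x y : radd (rsub x y) y = x.
Proof. by rewrite /rsub -raddA raddNl raddr0. Qed.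
Lemma rsub_eq0 x y : rsub x y = rzero -> x = y.
Proof. by move=> e; rewrite -(rsubK x y) e radd0. Qed.
Lemma roppB x y : ropp (rsub x y) = rsub y x.
Proof. by rewrite /rsub roppD roppK raddC. Qed.
Lemma rsub_chain x y z : radd (rsub z y) (rsub y x) = rsub z x.
Proof. by rewrite /rsub -raddA; congr (radd z _); rewrite raddA raddNl radd0. Qed.
Lemma rsubD x y x' y' : rsub (radd x y) (radd x' y') = radd (rsub x x') (rsub y y').
Proof. by rewrite /rsub roppD raddACA. Qed.
Lemma rsubN x y : rsub (ropp x) (ropp y) = ropp (rsub x y).
Proof. by rewrite /rsub roppD. Qed.
Lemma rsubZ l x y : rsub (rscal l x) (rscal l y) = rscal l (rsub x y).
Proof. by rewrite /rsub rscalDr rscalN. Qed.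
Lemma rsub_star x y : rsub (rstar x) (rstar y) = rstar (rsub x y).
Proof. by rewrite /rsub rstarD rstarN. Qed.
Lemma rsubM x y x' y' :
  rsub (rmul x y) (rmul x' y') = radd (rmul (rsub x x') y) (rmul x' (rsub y y')).
Proof.
rewrite /rsub rmulDl rmulDr rmulNl rmulNr -raddA; congr (radd _ _).
by rewrite raddA raddNl radd0.
Qed.
Lemma rsubACA x y z t : rsub (rsub x y) (rsub z t) = rsub (rsub x z) (rsub y t).
Proof. by rewrite {1 2}/rsub rsubD rsubN. Qed.
Lemma rsubBr x y z : rsub (rsub x z) (rsub y z) = rsub x y.
Proof. by rewrite rsubACA rsubrr rsub0. Qed.

End StarAlgebra.

(** * Seminorms and the directed family N(A) *)

Definition is_star_seminorm (A : raw) (N : A -> RR) : Prop :=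
  (forall x y : A, N (radd x y) <= N x + N y) /\
  (forall (l : CC) (x : A), N (rscal l x) = cnorm l * N x) /\
  (forall x y : A, N (rmul x y) <= N x * N y) /\
  (forall x : A, N (rstar x) = N x).

Lemma cnorm_ge0 l : 0 <= cnorm l.
Proof. by case: l => a b; rewrite /cnorm /=; apply: sqrtr_ge0. Qed.

Section StarSeminorm.
Variables (A : raw) (H : is_star_alg A) (N : A -> RR) (hN : is_star_seminorm N).
Implicit Types x y z : A.

Lemma seminormD x y : N (radd x y) <= N x + N y.
Proof. by case: hN. Qed.
Lemma seminormZ l x : N (rscal l x) = cnorm l * N x.
Proof. by case: hN => _ []. Qed.
Lemma seminormM x y : N (rmul x y) <= N x * N y.
Proof. by case: hN => _ [] _ []. Qed.
Lemma seminorm_star x : N (rstar x) = N x.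
Proof. by case: hN => _ [] _ []. Qed.

Lemma seminorm0 : N rzero = 0.
Proof. by rewrite -(rscal0 H rzero) seminormZ /cnorm Normc.normc0 mul0r. Qed.
Lemma seminormN x : N (ropp x) = N x.
Proof.
by rewrite -(rscalN1 H) seminormZ /cnorm normcN Normc.normc1 mul1r.
Qed.
Lemma seminorm_ge0 x : 0 <= N x.
Proof.
have := seminormD x (ropp x); rewrite (raddN H) seminorm0 seminormN => h; lra.
Qed.
Lemma seminormB x y : N (rsub x y) <= N x + N y.
Proof. by rewrite /rsub -(seminormN y); apply: seminormD. Qed.
Lemma seminorm_distC x y : N (rsub x y) = N (rsub y x).
Proof. by rewrite -(roppB H) seminormN. Qed.
Lemma seminorm_distD x y z : N (rsub z x) <= N (rsub z y) + N (rsub y x).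
Proof. by rewrite -(rsub_chain H x y z) seminormD. Qed.
Lemma seminorm_dist_dist x y : `|N x - N y| <= N (rsub x y).
Proof.
have h1 := seminorm_distD rzero y x; have h2 := seminorm_distD rzero x y.
rewrite !(rsub0 H) in h1; rewrite !(rsub0 H) seminorm_distC in h2.
rewrite ler_norml; apply/andP; split; lra.
Qed.
Lemma seminorm_subM x y x' y' :
  N (rsub (rmul x y) (rmul x' y')) <= N (rsub x x') * N y + N x' * N (rsub y y').
Proof. by rewrite (rsubM H); apply: le_trans (seminormD _ _) _; apply: lerD; apply: seminormM. Qed.

End StarSeminorm.

(* The C*-identity forces [p x <= p (rstar x)], hence star-invariance. *)
Lemma cstar_seminormW (A : raw) (p : A -> RR) :
  is_star_alg A -> is_cstar_seminorm p -> is_star_seminorm p.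
Proof.
move=> H [pD [pZ [pM pC]]].
have p_ge0 x : 0 <= p x.
  have := pD x (ropp x); rewrite (raddN H) -(rscalN1 H) pZ -(rscal0 H rzero) pZ.
  rewrite /cnorm normcN Normc.normc1 Normc.normc0 mul0r mul1r => h; lra.
have p_le_star x : p x <= p (rstar x).
  have := pM (rstar x) x; rewrite pC expr2 => h.
  have [px0|px_gt0] := leP (p x) 0; first by have := p_ge0 (rstar x); lra.
  by rewrite -(ler_pM2r px_gt0).
split => //; split => //; split => // x; apply/eqP; rewrite eq_le p_le_star.
by rewrite -{2}(rstarK H x) p_le_star.
Qed.

Lemma NA_star_seminorm (A : raw) (p : A -> RR) :
  is_star_alg A -> NA p -> is_star_seminorm p.
Proof. by move=> H [/(cstar_seminormW H)]. Qed.

Definition pointwise_directed (T : Type) (F : (T -> RR) -> Prop) : Prop :=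
  forall ps : list (T -> RR), (forall p, List.In p ps -> F p) ->
    exists2 q, F q & forall p, List.In p ps -> forall x, p x <= q x.

Lemma NA0 (A : raw) : is_topology (@ropen A) -> NA (fun _ : A => 0).
Proof.
move=> [openT _]; split; last first.
  by move=> x e e_gt0; exists setT; rewrite subrr normr0.
by do !split => *; rewrite ?(addr0, mulr0, expr2).
Qed.

Lemma NAmax (A : raw) (p q : A -> RR) : is_star_alg A -> is_topology (@ropen A) ->
  NA p -> NA q -> NA (fun x => Num.max (p x) (q x)).
Proof.
move=> H [_ [_ [openI _]]] hp hq.
have sp := NA_star_seminorm H hp; have sq := NA_star_seminorm H hq.
have [p_ge0 q_ge0] := (seminorm_ge0 H sp, seminorm_ge0 H sq).
have le_maxl x : p x <= Num.max (p x) (q x) by rewrite le_max lexx.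
have le_maxr x : q x <= Num.max (p x) (q x) by rewrite le_max lexx orbT.
split; [split; [|split; [|split]]|].
- move=> x y; rewrite ge_max; apply/andP; split.
    by apply: le_trans (seminormD sp x y) _; apply: lerD.
  by apply: le_trans (seminormD sq x y) _; apply: lerD.
- move=> l x; rewrite (seminormZ sp) (seminormZ sq).
  by rewrite maxr_pMr // cnorm_ge0.
- move=> x y; rewrite ge_max; apply/andP; split.
    by apply: le_trans (seminormM sp x y) _; apply: ler_pM.
  by apply: le_trans (seminormM sq x y) _; apply: ler_pM.
- move=> x; have [[_ [_ [_ pC]]] _] := hp; have [[_ [_ [_ qC]]] _] := hq.
  rewrite pC qC; have [pq|pq] := leP (p x) (q x).
    by rewrite !max_r // ler_pXn2r ?nnegrE.
  by rewrite !max_l // ?ltW // ltr_pXn2r ?nnegrE.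
move=> x e e_gt0.
have [U [openU [Ux pU]]] := hp.2 x e e_gt0.
have [V [openV [Vx qV]]] := hq.2 x e e_gt0.
exists (fun y => U y /\ V y); split; first exact: openI.
by split => // y [Uy Vy]; apply: dist_max_lt; [apply: pU|apply: qV].
Qed.

Lemma NA_directed (A : raw) : is_star_alg A -> is_topology (@ropen A) ->
  pointwise_directed (@NA A).
Proof.
move=> H T; elim=> [|p ps IH] hps; first by exists (fun _ => 0) => //; apply: NA0.
have [q hq q_dom] := IH (fun r hr => hps r (or_intror hr)).
exists (fun x => Num.max (p x) (q x)); first by apply: NAmax => //; apply: hps; left.
by move=> r [<-|hr] x; rewrite le_max ?lexx // q_dom ?orbT.
Qed.

(** * Topologies generated by families of seminorms *)

Definition sball (A : raw) (ps : list (A -> RR)) (x : A) (e : RR) (y : A) : Prop :=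
  forall p, List.In p ps -> p (rsub y x) < e.

Definition seminorm_open (A : raw) (F : (A -> RR) -> Prop) (U : A -> Prop) : Prop :=
  forall x, U x -> exists (ps : list (A -> RR)) (e : RR), 0 < e /\
    (forall p, List.In p ps -> F p) /\ (forall y, sball ps x e y -> U y).

Lemma seminorm_topology (A : raw) (F : (A -> RR) -> Prop) : is_topology (seminorm_open F).
Proof.
split; first by move=> x _; exists nil, 1.
split; first by [].
split=> [U V openU openV x [Ux Vx]|G openG x [U [GU Ux]]].
  have [ps1 [e1 [e1_gt0 [Fps1 ballU]]]] := openU x Ux.
  have [ps2 [e2 [e2_gt0 [Fps2 ballV]]]] := openV x Vx.
  exists (ps1 ++ ps2), (Order.min e1 e2); split; first by rewrite lt_min e1_gt0 e2_gt0.
  split; first by move=> p /List.in_app_iff[]; [apply: Fps1|apply: Fps2].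
  move=> y hy; split; [apply: ballU|apply: ballV] => p hp.
    by apply: lt_le_trans (hy p _) _; [apply/List.in_app_iff; left|rewrite ge_min lexx].
  by apply: lt_le_trans (hy p _) _; [apply/List.in_app_iff; right|rewrite ge_min lexx orbT].
have [ps [e [e_gt0 [Fps ballU]]]] := openG U GU x Ux.
by exists ps, e; split => //; split => // y hy; exists U; split => //; apply: ballU.
Qed.

Section SeminormTopology.
Variables (A : raw) (H : is_star_alg A) (F : (A -> RR) -> Prop).
Hypothesis F_seminorm : forall p, F p -> is_star_seminorm p.
Implicit Types (ps : list (A -> RR)) (x y : A) (U : A -> Prop).

Lemma sball_center ps x e : (forall p, List.In p ps -> F p) -> 0 < e -> sball ps x e x.
Proof. by move=> Fps e_gt0 p hp; rewrite (rsubrr H) (seminorm0 H (F_seminorm (Fps p hp))). Qed.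

Lemma sball_open ps x e : (forall p, List.In p ps -> F p) -> seminorm_open F (sball ps x e).
Proof.
move=> Fps y hy; have [d d_gt0 hd] := @list_gap _ ps (fun p => p (rsub y x)) e hy.
exists ps, d; split => //; split => // z hz p hp.
have := seminorm_distD H (F_seminorm (Fps p hp)) x y z.
by have := hz p hp; have := hd p hp => /=; lra.
Qed.

Lemma closure_seminormP (S : A -> Prop) x :
  closure_of (seminorm_open F) S x <->
  (forall ps e, 0 < e -> (forall p, List.In p ps -> F p) -> exists2 s, S s & sball ps x e s).
Proof.
split=> [clSx ps e e_gt0 Fps|hS U openU Ux].
  have [s [ball_s Ss]] := clSx _ (@sball_open ps x e Fps) (@sball_center ps x e Fps e_gt0).
  by exists s.
have [ps [e [e_gt0 [Fps ballU]]]] := openU x Ux.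
by have [s Ss ball_s] := hS ps e e_gt0 Fps; exists s; split => //; apply: ballU.
Qed.

Lemma seminorm_open_ball U x : pointwise_directed F -> seminorm_open F U -> U x ->
  exists p e, [/\ F p, 0 < e & forall y, p (rsub y x) < e -> U y].
Proof.
move=> dirF openU Ux; have [ps [e [e_gt0 [Fps ballU]]]] := openU x Ux.
have [q Fq q_dom] := dirF ps Fps.
exists q, e; split => // y hy; apply: ballU => p hp; exact: le_lt_trans (q_dom p hp _) hy.
Qed.

Lemma closure_directedP (S : A -> Prop) x : pointwise_directed F ->
  closure_of (seminorm_open F) S x <->
  (forall p e, F p -> 0 < e -> exists2 s, S s & p (rsub s x) < e).
Proof.
move=> dirF; rewrite closure_seminormP; split=> [hS p e Fp e_gt0|hS ps e e_gt0 Fps].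
  have [|s Ss hs] := hS [:: p] e e_gt0; first by move=> q [<-|[]].
  by exists s => //; apply: hs; left.
have [q Fq q_dom] := dirF ps Fps; have [s Ss hs] := hS q e Fq e_gt0.
by exists s => // p hp; apply: le_lt_trans (q_dom p hp _) hs.
Qed.

Lemma seminorm_open_cont p : (forall U, seminorm_open F U -> ropen U) -> F p -> cont_real p.
Proof.
move=> open_ropen Fp x e e_gt0; have Fp1 : forall q, List.In q [:: p] -> F q by move=> q [<-|[]].
exists (sball [:: p] x e); split; first by apply: open_ropen; apply: sball_open.
split; first exact: sball_center.
move=> y hy; apply: le_lt_trans (seminorm_dist_dist H (F_seminorm Fp) y x) _.
by apply: hy; left.
Qed.

Lemma cont_seminorm_bound q : (forall U, ropen U -> seminorm_open F U) ->
  is_star_seminorm q -> cont_real q -> forall e, 0 < e ->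
  exists ps d, [/\ 0 < d, forall p, List.In p ps -> F p &
    forall y, (forall p, List.In p ps -> p y < d) -> q y < e].
Proof.
move=> ropen_open sq cq e e_gt0.
have [U [openU [U0 qU]]] := cq rzero e e_gt0.
have [ps [d [d_gt0 [Fps ballU]]]] := ropen_open U openU rzero U0.
exists ps, d; split => // y hy.
have /qU : U y by apply: ballU => p hp; rewrite (rsub0 H); apply: hy.
by rewrite (seminorm0 H sq) subr0; apply: le_lt_trans (ler_norm _).
Qed.

Lemma sball_add ps x y e : (forall p, List.In p ps -> F p) -> 0 < e ->
  exists2 d, 0 < d & forall a b, sball ps x d a -> sball ps y d b ->
    sball ps (radd x y) e (radd a b).
Proof.
move=> Fps e_gt0; exists (e / 2) => [|a b ha hb p hp]; first lra.
rewrite (rsubD H); apply: le_lt_trans (seminormD (F_seminorm (Fps p hp)) _ _) _.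
by have := ha p hp; have := hb p hp; lra.
Qed.

Lemma sball_mul ps x y e : (forall p, List.In p ps -> F p) -> 0 < e ->
  exists2 d, 0 < d & forall a b, sball ps x d a -> sball ps y d b ->
    sball ps (rmul x y) e (rmul a b).
Proof.
move=> Fps e_gt0; have [d d_gt0 hd] : exists2 d, 0 < d & forall p, List.In p ps -> forall a b,
    p (rsub a x) < d -> p (rsub b y) < d -> p (rsub (rmul a b) (rmul x y)) < e.
  apply: list_pos_min => [p d d' _ d'd hd a b ha hb|p hp].
    by apply: hd; apply: lt_le_trans d'd.
  have sp := F_seminorm (Fps p hp); have p_ge0 := seminorm_ge0 H sp.
  have [d d_gt0 hd] := small_factor (addr_ge0 (p_ge0 x) (p_ge0 y)) e_gt0.
  exists d => // a b ha hb; apply: le_lt_trans (seminorm_subM H sp a b x y) _.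
  have pb : p b <= p y + d by have := seminorm_distD H sp rzero y b; rewrite !(rsub0 H); lra.
  have := p_ge0 (rsub a x); have := p_ge0 (rsub b y); have := p_ge0 x; have := p_ge0 b.
  by nra.
by exists d => // a b ha hb p hp; apply: hd => //; [apply: ha|apply: hb].
Qed.

Section GeneratedTopology.
Hypothesis openE : forall U, ropen U <-> seminorm_open F U.

Lemma cont2_of_sball (op : A -> A -> A) :
  (forall ps x y e, (forall p, List.In p ps -> F p) -> 0 < e ->
    exists2 d, 0 < d & forall a b, sball ps x d a -> sball ps y d b ->
      sball ps (op x y) e (op a b)) ->
  cont2 (@ropen A) (@ropen A) (@ropen A) op.
Proof.
move=> op_ball W /openE openW [x y] /= Wxy; have [ps [e [e_gt0 [Fps ballW]]]] := openW _ Wxy.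
have [d d_gt0 hd] := op_ball ps x y e Fps e_gt0.
exists (sball ps x d), (sball ps y d).
do 4?split; try by [apply/openE; apply: sball_open|apply: sball_center].
by move=> a b ha hb; apply: ballW; apply: hd.
Qed.

Lemma cont1_of_sball (op : A -> A) :
  (forall p, F p -> forall x y, p (rsub (op y) (op x)) = p (rsub y x)) ->
  cont1 (@ropen A) (@ropen A) op.
Proof.
move=> op_iso W /openE openW; apply/openE => x Wx.
have [ps [e [e_gt0 [Fps ballW]]]] := openW _ Wx.
exists ps, e; do 2!split => //; move=> y hy; apply: ballW => p hp.
by rewrite op_iso; [apply: hy|apply: Fps].
Qed.

Lemma tsa_of_seminorm_topology : is_tsa A.
Proof.
have [T1 [T2 [T3 T4]]] := seminorm_topology F.
split => //; split.
  split; first by apply/openE.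
  split; first by apply/openE.
  split; first by move=> U V /openE openU /openE openV; apply/openE; apply: T3.
  by move=> G openG; apply/openE; apply: T4 => U /openG /openE.
split; first exact: cont2_of_sball sball_add.
split; first exact: cont2_of_sball sball_mul.
split; apply: cont1_of_sball => p Fp x y.
  by rewrite (rsubN H) (seminormN H (F_seminorm Fp)).
by rewrite (rsub_star H) (seminorm_star (F_seminorm Fp)).
Qed.

End GeneratedTopology.

End SeminormTopology.

Lemma cstarP (A : raw) (S : A -> Prop) (x : A) : is_star_alg A -> is_topology (@ropen A) ->
  cstar S x <-> (forall p e, NA p -> 0 < e -> exists2 s, S s & p (rsub s x) < e).
Proof.
move=> H T; apply: closure_directedP => //; last exact: NA_directed.
by move=> p; apply: NA_star_seminorm.
Qed.

Lemma star_open_generated (A : raw) (F : (A -> RR) -> Prop) : is_star_alg A ->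
  (forall p, F p -> NA p) -> (forall U, ropen U <-> seminorm_open F U) ->
  forall U, star_open U <-> seminorm_open F U.
Proof.
move=> H F_NA openE U; split=> [openU x Ux|openU x Ux]; last first.
  have [ps [e [e_gt0 [Fps ballU]]]] := openU x Ux.
  by exists ps, e; split => //; split => // p /Fps /F_NA.
have F_seminorm p : F p -> is_star_seminorm p by move/F_NA; apply: NA_star_seminorm.
have [_ [T _]] := tsa_of_seminorm_topology H F_seminorm openE.
have [q [e [NAq e_gt0 qU]]] := seminorm_open_ball (NA_directed H T) openU Ux.
have [ps [d [d_gt0 Fps qd]]] := cont_seminorm_bound H (fun U => proj1 (openE U))
  (NA_star_seminorm H NAq) NAq.2 e_gt0.
by exists ps, d; split => //; split => // y hy; apply: qU; apply: qd.
Qed.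

(** * Homomorphisms and products *)

Lemma tsa_star_alg (A : raw) : is_tsa A -> is_star_alg A.
Proof. by case. Qed.
Lemma tsa_topology (A : raw) : is_tsa A -> is_topology (@ropen A).
Proof. by case=> _ []. Qed.

Lemma prod_star_alg (A B : raw) :
  is_star_alg A -> is_star_alg B -> is_star_alg (prod_raw A B).
Proof.
move=> HA HB.
split; first by move=> [? ?] [? ?] [? ?] /=; rewrite (raddA HA) (raddA HB).
split; first by move=> [? ?] [? ?] /=; rewrite (raddC HA) (raddC HB).
split; first by move=> [? ?] /=; rewrite (radd0 HA) (radd0 HB).
split; first by move=> [? ?] /=; rewrite (raddN HA) (raddN HB).
split; first by move=> ? [? ?] [? ?] /=; rewrite (rscalDr HA) (rscalDr HB).
split; first by move=> ? ? [? ?] /=; rewrite (rscalDl HA) (rscalDl HB).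
split; first by move=> ? ? [? ?] /=; rewrite (rscalA HA) (rscalA HB).
split; first by move=> [? ?] /=; rewrite (rscal1 HA) (rscal1 HB).
split; first by move=> [? ?] [? ?] [? ?] /=; rewrite (rmulA HA) (rmulA HB).
split; first by move=> [? ?] [? ?] [? ?] /=; rewrite (rmulDr HA) (rmulDr HB).
split; first by move=> [? ?] [? ?] [? ?] /=; rewrite (rmulDl HA) (rmulDl HB).
split; first by move=> ? [? ?] [? ?] /=; rewrite (rscalAl HA) (rscalAl HB).
split; first by move=> ? [? ?] [? ?] /=; rewrite (rscalAr HA) (rscalAr HB).
split; first by move=> [? ?] /=; rewrite (rstarK HA) (rstarK HB).
split; first by move=> [? ?] [? ?] /=; rewrite (rstarD HA) (rstarD HB).
split; first by move=> ? [? ?] /=; rewrite (rstarZ HA) (rstarZ HB).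
by move=> [? ?] [? ?] /=; rewrite (rstarM HA) (rstarM HB).
Qed.

Lemma prod_raw_topology (A B : raw) : is_topology (@ropen A) -> is_topology (@ropen B) ->
  is_topology (@ropen (prod_raw A B)).
Proof.
move=> [AT [_ [AI _]]] [BT [_ [BI _]]]; split.
  by move=> z _; exists (fun _ => True), (fun _ => True).
split; first by [].
split=> [W1 W2 openW1 openW2 z [W1z W2z]|G openG z [W [GW Wz]]].
  have [U1 [V1 [oU1 [oV1 [U1z [V1z W1UV]]]]]] := openW1 z W1z.
  have [U2 [V2 [oU2 [oV2 [U2z [V2z W2UV]]]]]] := openW2 z W2z.
  exists (fun a => U1 a /\ U2 a), (fun b => V1 b /\ V2 b).
  split; first exact: AI.
  split; first exact: BI.
  by do 2!split => //; move=> a b [? ?] [? ?]; split; [apply: W1UV|apply: W2UV].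
have [U [V [oU [oV [Uz [Vz WUV]]]]]] := openG W GW z Wz.
exists U, V; do 4?split => //.
by move=> a b Ua Vb; exists W; split => //; apply: WUV.
Qed.

Definition is_star_hom (A B : raw) (f : A -> B) : Prop :=
  [/\ f rzero = rzero, forall x y, f (radd x y) = radd (f x) (f y),
      forall l x, f (rscal l x) = rscal l (f x),
      forall x y, f (rmul x y) = rmul (f x) (f y) & forall x, f (rstar x) = rstar (f x)].

Definition is_continuous (A B : raw) (f : A -> B) : Prop :=
  forall x U, ropen U -> U (f x) -> exists V, [/\ ropen V, V x & forall y, V y -> U (f y)].

Lemma star_alg_image (A B : raw) (f : A -> B) : is_star_alg A -> is_star_hom f ->
  (forall x, f (ropp x) = ropp (f x)) -> (forall y, exists x, y = f x) -> is_star_alg B.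
Proof.
move=> H [f0 fD fZ fM fJ] fN f_surj; have f_ops := (fD, fZ, fM, fJ, fN).
have lift (P : B -> Prop) : (forall x, P (f x)) -> forall y, P y.
  by move=> Pf y; have [x ->] := f_surj y.
split; first by move=> X Y Z; elim/lift: X => x; elim/lift: Y => y; elim/lift: Z => z;
  rewrite -?f_ops (raddA H).
split; first by move=> X Y; elim/lift: X => x; elim/lift: Y => y; rewrite -?f_ops (raddC H).
split; first by move=> X; elim/lift: X => x; rewrite -[rzero]f0 -?f_ops (radd0 H).
split; first by move=> X; elim/lift: X => x; rewrite -?f_ops (raddN H) ?f0.
split; first by move=> l X Y; elim/lift: X => x; elim/lift: Y => y; rewrite -?f_ops (rscalDr H).
split; first by move=> l m X; elim/lift: X => x; rewrite -?f_ops (rscalDl H).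
split; first by move=> l m X; elim/lift: X => x; rewrite -?f_ops (rscalA H).
split; first by move=> X; elim/lift: X => x; rewrite -?f_ops (rscal1 H).
split; first by move=> X Y Z; elim/lift: X => x; elim/lift: Y => y; elim/lift: Z => z;
  rewrite -?f_ops (rmulA H).
split; first by move=> X Y Z; elim/lift: X => x; elim/lift: Y => y; elim/lift: Z => z;
  rewrite -?f_ops (rmulDr H).
split; first by move=> X Y Z; elim/lift: X => x; elim/lift: Y => y; elim/lift: Z => z;
  rewrite -?f_ops (rmulDl H).
split; first by move=> l X Y; elim/lift: X => x; elim/lift: Y => y; rewrite -?f_ops (rscalAl H).
split; first by move=> l X Y; elim/lift: X => x; elim/lift: Y => y; rewrite -?f_ops (rscalAr H).
split; first by move=> X; elim/lift: X => x; rewrite -?f_ops (rstarK H).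
split; first by move=> X Y; elim/lift: X => x; elim/lift: Y => y; rewrite -?f_ops (rstarD H).
split; first by move=> l X; elim/lift: X => x; rewrite -?f_ops (rstarZ H).
by move=> X Y; elim/lift: X => x; elim/lift: Y => y; rewrite -?f_ops (rstarM H).
Qed.

Lemma is_ssub_preimage (A B : raw) (f : A -> B) (S : B -> Prop) :
  is_star_hom f -> is_ssub S -> is_ssub (fun x => S (f x)).
Proof.
move=> [f0 fD fZ fM fJ] [S0 [SD [SZ [SM SJ]]]].
split; first by rewrite f0.
split; first by move=> x y Sx Sy; rewrite fD; apply: SD.
split; first by move=> l x Sx; rewrite fZ; apply: SZ.
split; first by move=> x y Sx Sy; rewrite fM; apply: SM.
by move=> x Sx; rewrite fJ; apply: SJ.
Qed.

Lemma is_ssub_image (A B : raw) (f : A -> B) (S : A -> Prop) :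
  is_star_hom f -> is_ssub S -> is_ssub (fun y => exists2 x, S x & y = f x).
Proof.
move=> [f0 fD fZ fM fJ] [S0 [SD [SZ [SM SJ]]]].
split; first by exists rzero.
split; first by move=> _ _ [x Sx ->] [y Sy ->]; exists (radd x y); [apply: SD|rewrite fD].
split; first by move=> l _ [x Sx ->]; exists (rscal l x); [apply: SZ|rewrite fZ].
split; first by move=> _ _ [x Sx ->] [y Sy ->]; exists (rmul x y); [apply: SM|rewrite fM].
by move=> _ [x Sx ->]; exists (rstar x); [apply: SJ|rewrite fJ].
Qed.

Lemma is_ssub_graph (A B : raw) (f : A -> B) :
  is_star_hom f -> is_ssub (fun w : prod_raw A B => w.2 = f w.1).
Proof.
move=> [f0 fD fZ fM fJ].
split; first by rewrite /= f0.
split; first by move=> [x1 x2] [y1 y2] /= -> ->; rewrite fD.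
split; first by move=> l [x1 x2] /= ->; rewrite fZ.
split; first by move=> [x1 x2] [y1 y2] /= -> ->; rewrite fM.
by move=> [x1 x2] /= ->; rewrite fJ.
Qed.

Lemma id_star_hom (A : raw) : is_star_hom (@id A).
Proof. by []. Qed.

Lemma prod_map_star_hom (A B C D : raw) (f : A -> C) (g : B -> D) :
  is_star_hom f -> is_star_hom g ->
  is_star_hom (fun z : prod_raw A B => (f z.1, g z.2) : prod_raw C D).
Proof.
move=> [f0 fD fZ fM fJ] [g0 gD gZ gM gJ].
by split=> [|x y|l x|x y|x] /=; rewrite ?(f0, g0, fD, gD, fZ, gZ, fM, gM, fJ, gJ).
Qed.

Lemma NA_comp (A B : raw) (f : A -> B) (p : B -> RR) :
  is_star_hom f -> is_continuous f -> NA p -> NA (fun x => p (f x)).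
Proof.
move=> [_ fD fZ fM fJ] f_cont [[pD [pZ [pM pC]]] p_cont]; split.
  split; first by move=> x y; rewrite fD.
  split; first by move=> l x; rewrite fZ.
  split; first by move=> x y; rewrite fM.
  by move=> x; rewrite fM fJ.
move=> x e e_gt0; have [U [openU [Ufx pU]]] := p_cont (f x) e e_gt0.
have [V [openV Vx VU]] := f_cont x U openU Ufx.
by exists V; split => //; split => // y /VU /pU.
Qed.

Section ProductProjections.
Variables (A B : raw) (HA : is_star_alg A) (HB : is_star_alg B).
Variables (TA : is_topology (@ropen A)) (TB : is_topology (@ropen B)).

Lemma fst_star_hom : is_star_hom (fun z : prod_raw A B => z.1).
Proof. by []. Qed.
Lemma snd_star_hom : is_star_hom (fun z : prod_raw A B => z.2).
Proof. by []. Qed.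
Lemma inl_star_hom : is_star_hom (fun a : A => (a, rzero) : prod_raw A B).
Proof.
by split=> [|x y|l x|x y|x] //=; rewrite ?(radd0 HB, rscalr0 HB, rmul0 HB, rstar0 HB).
Qed.
Lemma inr_star_hom : is_star_hom (fun b : B => (rzero, b) : prod_raw A B).
Proof.
by split=> [|x y|l x|x y|x] //=; rewrite ?(radd0 HA, rscalr0 HA, rmul0 HA, rstar0 HA).
Qed.

Lemma fst_continuous : is_continuous (fun z : prod_raw A B => z.1).
Proof.
move=> z U openU Uz; exists (fun w : prod_raw A B => U w.1); split => // w Uw.
by exists U, (fun _ => True); do 4?split => //; case: TB.
Qed.
Lemma snd_continuous : is_continuous (fun z : prod_raw A B => z.2).
Proof.
move=> z V openV Vz; exists (fun w : prod_raw A B => V w.2); split => // w Vw.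
by exists (fun _ => True), V; do 4?split => //; case: TA.
Qed.
Lemma inl_continuous : is_continuous (fun a : A => (a, rzero) : prod_raw A B).
Proof.
move=> a W openW Wa; have [U [V [openU [_ [Ua [V0 UV]]]]]] := openW _ Wa.
by exists U; split => // a' Ua'; apply: UV.
Qed.
Lemma inr_continuous : is_continuous (fun b : B => (rzero, b) : prod_raw A B).
Proof.
move=> b W openW Wb; have [U [V [_ [openV [U0 [Vb UV]]]]]] := openW _ Wb.
by exists V; split => // b' Vb'; apply: UV.
Qed.

Lemma NA_fst p : NA p -> NA (fun z : prod_raw A B => p z.1).
Proof. exact: NA_comp fst_star_hom fst_continuous. Qed.
Lemma NA_snd p : NA p -> NA (fun z : prod_raw A B => p z.2).
Proof. exact: NA_comp snd_star_hom snd_continuous. Qed.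
Lemma NA_inl q : NA q -> NA (fun a : A => q ((a, rzero) : prod_raw A B)).
Proof. exact: NA_comp inl_star_hom inl_continuous. Qed.
Lemma NA_inr q : NA q -> NA (fun b : B => q ((rzero, b) : prod_raw A B)).
Proof. exact: NA_comp inr_star_hom inr_continuous. Qed.

Lemma NA_max_pair p q : NA p -> NA q ->
  NA (fun z : prod_raw A B => Num.max (p z.1) (q z.2)).
Proof.
move=> hp hq; apply: NAmax.
- exact: prod_star_alg.
- exact: prod_raw_topology.
- exact: NA_fst.
- exact: NA_snd.
Qed.

Lemma seminorm_pair_le q : is_star_seminorm q ->
  forall a b, q ((a, b) : prod_raw A B) <= q (a, rzero) + q (rzero, b).
Proof.
move=> sq a b; apply: le_trans (seminormD sq (a, rzero) (rzero, b)).
by rewrite /= (raddr0 HA) (radd0 HB).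
Qed.

Lemma cstarX (S : A -> Prop) (T : B -> Prop) (z : prod_raw A B) :
  cstar (fun w : prod_raw A B => S w.1 /\ T w.2) z <-> cstar S z.1 /\ cstar T z.2.
Proof.
have HP := prod_star_alg HA HB; have TP := prod_raw_topology TA TB.
rewrite !cstarP //; split=> [clST|[clS clT] q e hq e_gt0].
  split=> p e hp e_gt0.
    by have [w [Sw _] hw] := clST _ e (NA_fst hp) e_gt0; exists w.1.
  by have [w [_ Tw] hw] := clST _ e (NA_snd hp) e_gt0; exists w.2.
have e2_gt0 : 0 < e / 2 by lra.
have [s Ss hs] := clS _ _ (NA_inl hq) e2_gt0.
have [t Tt ht] := clT _ _ (NA_inr hq) e2_gt0.
exists (s, t) => //; apply: le_lt_trans (seminorm_pair_le (NA_star_seminorm HP hq) _ _) _.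
by rewrite /= in hs ht; lra.
Qed.

End ProductProjections.

Lemma cstar_diag (A : raw) (x y : A) : is_star_alg A -> is_topology (@ropen A) ->
  cstar (fun w : prod_raw A A => w.1 = w.2) ((x, y) : prod_raw A A) <-> reducing (rsub x y).
Proof.
move=> H T; rewrite cstarP; [|exact: prod_star_alg|exact: prod_raw_topology].
split=> [clD p hp|red q e hq e_gt0].
  have sp := NA_star_seminorm H hp; apply/eqP; rewrite eq_le seminorm_ge0 // andbT.
  apply/ler_addgt0Pr => e e_gt0; have e2_gt0 : 0 < e / 2 by lra.
  have [w w12] := clD _ _ (NA_max_pair H H T T hp hp) e2_gt0.
  rewrite gt_max => /andP[wx wy].
  have wx' : p (rsub w.1 x) < e / 2 := wx.
  have wy' : p (rsub w.1 y) < e / 2 by rewrite w12.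
  have := seminorm_distD H sp y w.1 x; rewrite (seminorm_distC H sp x w.1); lra.
exists (x, x) => //; have -> : rsub ((x, x) : prod_raw A A) (x, y) = (rzero, rsub x y).
  by rewrite /rsub /= (raddN H).
by rewrite (red _ (NA_inr H hq)).
Qed.

(** * The limit of the A_p *)

Section CauchySequences.
Variables (A : raw) (H : is_star_alg A) (p : A -> RR) (sp : is_star_seminorm p).
Implicit Types (u v w : nat -> A) (x y s : A).

Lemma pcauchy_cst x : pcauchy p (fun _ => x).
Proof. by move=> e e_gt0; exists 0%N => m n _ _; rewrite (rsubrr H) (seminorm0 H sp). Qed.

Lemma pnull_cst0 : pnull p (fun _ => rzero).
Proof. by rewrite /pnull (seminorm0 H sp); apply: cvg_cst. Qed.

Lemma cdist_cvg u v : pcauchy p u -> pcauchy p v ->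
  (fun n => p (rsub (u n) (v n))) @ \oo --> cdist p u v.
Proof.
move=> hu hv; apply: cvgP; apply: cvgn_cauchy => e e_gt0; have e2_gt0 : 0 < e / 2 by lra.
have [N1 hN1] := hu _ e2_gt0; have [N2 hN2] := hv _ e2_gt0.
exists (maxn N1 N2) => m n; rewrite !geq_max => /andP[m1 m2] /andP[n1 n2].
apply: le_lt_trans (seminorm_dist_dist H sp _ _) _; rewrite (rsubACA H).
apply: le_lt_trans (seminormB H sp _ _) _.
by have := hN1 m n m1 n1; have := hN2 m n m2 n2; lra.
Qed.

Lemma cdist_ge0 u v : pcauchy p u -> pcauchy p v -> 0 <= cdist p u v.
Proof.
move=> hu hv; apply: (@cvgn_le (fun _ => 0) _ _ _ 0%N (cvg_cst _) (cdist_cvg hu hv)) => n _.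
exact: seminorm_ge0.
Qed.

Lemma cdist_distD u v w : pcauchy p u -> pcauchy p v -> pcauchy p w ->
  cdist p u w <= cdist p u v + cdist p v w.
Proof.
move=> hu hv hw; apply: (cvgn_le (N := 0%N) (cdist_cvg hu hw)
  (cvgnD (cdist_cvg hu hv) (cdist_cvg hv hw))).
by move=> n _; exact: (seminorm_distD H sp (w n) (v n) (u n)).
Qed.

Lemma cdist_refl u : cdist p u u = 0.
Proof.
rewrite /cdist; under eq_fun do rewrite (rsubrr H) (seminorm0 H sp).
by apply: cvgn_lim; apply: cvg_cst.
Qed.

Lemma cdist_cst x y : cdist p (fun _ => x) (fun _ => y) = p (rsub x y).
Proof. by apply: cvgn_lim; apply: cvg_cst. Qed.

Lemma pnull_dist u s x : pnull p (fun n => rsub (u n) s) ->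
  (fun n => p (rsub (u n) x)) @ \oo --> p (rsub s x).
Proof.
move=> us; apply: cvg_dist_bound us _ => n.
by apply: le_trans (seminorm_dist_dist H sp _ _) _; rewrite (rsubBr H).
Qed.

Lemma cdist_pnull_l u s x : pnull p (fun n => rsub (u n) s) ->
  cdist p u (fun _ => x) = p (rsub s x).
Proof. by move=> us; apply: cvgn_lim; apply: pnull_dist. Qed.

Lemma cdist_pnull_r u s x : pnull p (fun n => rsub (u n) s) ->
  cdist p (fun _ => x) u = p (rsub x s).
Proof.
move=> us; rewrite /cdist (seminorm_distC H sp x).
under eq_fun do rewrite (seminorm_distC H sp x).
exact: cdist_pnull_l.
Qed.

End CauchySequences.

Section LimitBalls.
Variables (A : raw) (H : is_star_alg A).

Lemma eta_in_lim (x : A) : in_lim (eta x).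
Proof.
split=> [p hp|p q hp hq _]; first exact: pcauchy_cst (NA_star_seminorm H hp) _.
by rewrite /pnull /eta (rsubrr H); apply: pnull_cst0 (NA_star_seminorm H hp).
Qed.

Lemma lim_eq_refl (u : fam A) : lim_eq u u.
Proof.
move=> p hp; rewrite /pnull; under eq_fun do rewrite (rsubrr H).
exact: pnull_cst0 (NA_star_seminorm H hp).
Qed.

Definition lball (v : fam A) (ps : list (A -> RR)) (e : RR) (w : fam A) : Prop :=
  in_lim w /\ forall p, List.In p ps -> cdist p (w p) (v p) < e.

Lemma lball_open v ps e : in_lim v -> (forall p, List.In p ps -> NA p) -> lim_open (lball v ps e).
Proof.
move=> hv hps w hw [_ wv]; have [d d_gt0 hd] := list_gap wv.
exists ps, d; split => //; split => // w' hw' w'w; split => // p hp.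
have [sp NAp] := (NA_star_seminorm H (hps p hp), hps p hp).
have := cdist_distD H sp (hw'.1 p NAp) (hw.1 p NAp) (hv.1 p NAp).
by have := hd p hp; have := w'w p hp => /=; lra.
Qed.

Lemma lball_center v ps e : in_lim v -> 0 < e -> (forall p, List.In p ps -> NA p) ->
  lball v ps e v.
Proof.
by move=> hv e_gt0 hps; split => // p hp; rewrite (cdist_refl H (NA_star_seminorm H (hps p hp))).
Qed.

End LimitBalls.

(** * The reflection PC*(A) *)

Section ReducingIdeal.
Variables (A : raw) (H : is_star_alg A).
Implicit Types x y : A.

Lemma reducing_le0 y : (forall p, NA p -> p y <= 0) -> reducing y.
Proof.
move=> y_le0 p hp; have sp := NA_star_seminorm H hp.
by apply/eqP; rewrite eq_le (seminorm_ge0 H sp) andbT y_le0.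
Qed.

Lemma reducingD x y : reducing x -> reducing y -> reducing (radd x y).
Proof.
move=> rx ry; apply: reducing_le0 => p hp.
by apply: le_trans (seminormD (NA_star_seminorm H hp) x y) _; rewrite (rx p hp) (ry p hp) addr0.
Qed.
Lemma reducingMl x y : reducing x -> reducing (rmul x y).
Proof.
move=> rx; apply: reducing_le0 => p hp.
by apply: le_trans (seminormM (NA_star_seminorm H hp) x y) _; rewrite (rx p hp) mul0r.
Qed.
Lemma reducingMr x y : reducing y -> reducing (rmul x y).
Proof.
move=> ry; apply: reducing_le0 => p hp.
by apply: le_trans (seminormM (NA_star_seminorm H hp) x y) _; rewrite (ry p hp) mulr0.
Qed.
Lemma reducingZ l x : reducing x -> reducing (rscal l x).
Proof. by move=> rx p hp; rewrite (seminormZ (NA_star_seminorm H hp)) (rx p hp) mulr0. Qed.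
Lemma reducingN x : reducing x -> reducing (ropp x).
Proof. by move=> rx p hp; rewrite (seminormN H (NA_star_seminorm H hp)) rx. Qed.
Lemma reducing_star x : reducing x -> reducing (rstar x).
Proof. by move=> rx p hp; rewrite (seminorm_star (NA_star_seminorm H hp)) rx. Qed.
Lemma reducing_subC x y : reducing (rsub x y) -> reducing (rsub y x).
Proof. by move=> rxy p hp; rewrite (seminorm_distC H (NA_star_seminorm H hp)) rxy. Qed.

Lemma reducing_seminorm x y p : reducing (rsub x y) -> NA p -> p x = p y.
Proof.
move=> rxy hp; apply/eqP; rewrite -subr_eq0 -normr_le0 -(rxy p hp).
exact: seminorm_dist_dist (NA_star_seminorm H hp) _ _.
Qed.

End ReducingIdeal.

Section PCAlgebra.
Variables (A : raw) (H : is_star_alg A).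
Implicit Types (x y : A) (X Y : PC A).

Lemma pc_class_eta x : pc_class x (eta x).
Proof. by split; [apply: eta_in_lim|apply: lim_eq_refl]. Qed.

Lemma pc_repE X : proj1_sig X = pc_class (pc_rep X).
Proof. by rewrite /pc_rep; case: (cid (proj2_sig X)). Qed.

Lemma alpha_rep X : alpha (pc_rep X) = X.
Proof. by case: X => X hX; apply: eq_exist; rewrite -pc_repE. Qed.

Lemma alpha_surj X : exists x, X = alpha x.
Proof. by exists (pc_rep X); rewrite alpha_rep. Qed.

Lemma pc_class_reducing x y : reducing (rsub x y) -> forall v, pc_class x v -> pc_class y v.
Proof.
move=> rxy v [hv vx]; split => // p hp; have sp := NA_star_seminorm H hp.
by have := @pnull_dist A H p sp (v p) x y (vx p hp); rewrite (rxy p hp).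
Qed.

Lemma alpha_eqP x y : alpha x = alpha y <-> reducing (rsub x y).
Proof.
split=> [/(f_equal (@proj1_sig _ _)) /= xy p hp|rxy].
  have [_ /(_ p hp) etax_y] : pc_class y (eta x) by rewrite -xy; apply: pc_class_eta.
  have etax_y' : (fun n => p (rsub (eta x p n) (eta y p n))) @ \oo --> p (rsub x y).
    by rewrite /eta; apply: cvg_cst.
  by rewrite -(cvgn_lim etax_y) (cvgn_lim etax_y').
rewrite /alpha; apply: eq_exist; apply: funext => v; apply: propext.
by split; apply: pc_class_reducing => //; apply: (reducing_subC H).
Qed.

Lemma reducing_rep x : reducing (rsub (pc_rep (alpha x)) x).
Proof. by apply/alpha_eqP; rewrite alpha_rep. Qed.

Lemma alphaD x y : @radd (PC A) (alpha x) (alpha y) = alpha (radd x y).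
Proof. by apply/alpha_eqP; rewrite (rsubD H); apply: (reducingD H); apply: reducing_rep. Qed.
Lemma alphaN x : @ropp (PC A) (alpha x) = alpha (ropp x).
Proof. by apply/alpha_eqP; rewrite (rsubN H); apply: (reducingN H); apply: reducing_rep. Qed.
Lemma alphaZ l x : @rscal (PC A) l (alpha x) = alpha (rscal l x).
Proof. by apply/alpha_eqP; rewrite (rsubZ H); apply: (reducingZ H); apply: reducing_rep. Qed.
Lemma alphaM x y : @rmul (PC A) (alpha x) (alpha y) = alpha (rmul x y).
Proof.
apply/alpha_eqP; rewrite (rsubM H); apply: (reducingD H).
  by apply: (reducingMl H); apply: reducing_rep.
by apply: (reducingMr H); apply: reducing_rep.
Qed.
Lemma alpha_star x : @rstar (PC A) (alpha x) = alpha (rstar x).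
Proof.
by apply/alpha_eqP; rewrite (rsub_star H); apply: (reducing_star H); apply: reducing_rep.
Qed.
Lemma alphaB x y : @rsub (PC A) (alpha x) (alpha y) = alpha (rsub x y).
Proof. by rewrite /rsub alphaN alphaD. Qed.

Lemma alpha_star_hom : is_star_hom (@alpha A : A -> PC A).
Proof. by split=> [|x y|l x|x y|x]; rewrite ?alphaD ?alphaZ ?alphaM ?alpha_star. Qed.

Lemma alpha0 : @rzero (PC A) = alpha rzero.
Proof. by []. Qed.

Lemma PC_star_alg : is_star_alg (PC A).
Proof. by apply: star_alg_image H alpha_star_hom _ alpha_surj => x; rewrite alphaN. Qed.

End PCAlgebra.

Definition pc_seminorm (A : raw) (p : A -> RR) (X : PC A) : RR := p (pc_rep X).

Definition pc_seminorms (A : raw) (N : PC A -> RR) : Prop := exists2 p, NA p & N = pc_seminorm p.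

Section PCTopology.
Variables (A : raw) (H : is_star_alg A) (TA : is_topology (@ropen A)).
Implicit Types (x y : A) (X Y : PC A) (p : A -> RR).

Lemma pc_seminorm_alpha p x : NA p -> pc_seminorm p (alpha x) = p x.
Proof. by move=> hp; apply: (reducing_seminorm H) hp; apply: reducing_rep. Qed.

Lemma pc_seminormB p x y : NA p -> pc_seminorm p (@rsub (PC A) (alpha y) (alpha x)) = p (rsub y x).
Proof. by move=> hp; rewrite alphaB // pc_seminorm_alpha. Qed.

Lemma pc_seminorm_subE p X Y : NA p ->
  pc_seminorm p (rsub Y X) = p (rsub (pc_rep Y) (pc_rep X)).
Proof. by move=> hp; rewrite -{1}(alpha_rep Y) -{1}(alpha_rep X) pc_seminormB. Qed.

Lemma pc_seminorm_star_seminorm p : NA p -> is_star_seminorm (pc_seminorm p).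
Proof.
move=> hp; have sp := NA_star_seminorm H hp.
have [x_ y_] := (alpha_surj (A := A), alpha_surj (A := A)).
split; first by move=> X Y; have [x ->] := x_ X; have [y ->] := y_ Y;
  rewrite alphaD // !pc_seminorm_alpha //; apply: seminormD.
split; first by move=> l X; have [x ->] := x_ X;
  rewrite alphaZ // !pc_seminorm_alpha //; apply: seminormZ.
split; first by move=> X Y; have [x ->] := x_ X; have [y ->] := y_ Y;
  rewrite alphaM // !pc_seminorm_alpha //; apply: seminormM.
by move=> X; have [x ->] := x_ X; rewrite alpha_star // !pc_seminorm_alpha //; apply: seminorm_star.
Qed.

Lemma pc_seminorms_directed : pointwise_directed (@pc_seminorms A).
Proof.
move=> Ns /list_preimage[ps NAps ->].
have [q NAq q_dom] := NA_directed H TA NAps.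
exists (pc_seminorm q); first by exists q.
by move=> _ /List.in_map_iff[p [<- hp]] X; apply: q_dom.
Qed.

Lemma pc_open_seminorm V : pc_open V -> seminorm_open (@pc_seminorms A) V.
Proof.
move=> [U [openU VE]] X VX; have [v [Xv Uv]] := (VE X).1 VX.
have [hv vX] : pc_class (pc_rep X) v by rewrite -pc_repE.
have [ps [e [e_gt0 [NAps ballU]]]] := openU v hv Uv.
exists (List.map (@pc_seminorm A) ps), e; split => //; split.
  by move=> _ /List.in_map_iff[p [<- hp]]; exists p => //; apply: NAps.
move=> Y hY; apply/VE; exists (eta (pc_rep Y)); split.
  by rewrite pc_repE; apply: pc_class_eta.
apply: ballU => [|p hp]; first exact: eta_in_lim.
have sp := NA_star_seminorm H (NAps p hp).
rewrite (@cdist_pnull_r A H p sp (v p) (pc_rep X) (pc_rep Y) (vX p (NAps p hp))).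
rewrite -pc_seminorm_subE; last exact: NAps.
by apply: hY; apply: List.in_map.
Qed.

Lemma seminorm_pc_open V : seminorm_open (@pc_seminorms A) V -> pc_open V.
Proof.
move=> openV.
(* The cdist-balls around the points [eta (pc_rep X)], [X] in [V], chosen small enough
   that their traces on [eta A] stay inside [V]. *)
pose U v := exists2 X, V X & exists p e, [/\ NA p, 0 < e,
  forall Y, p (rsub (pc_rep Y) (pc_rep X)) < e -> V Y, in_lim v &
  cdist p (v p) (eta (pc_rep X) p) < e].
exists U; split.
  move=> v hv [X VX [p [e [NAp e_gt0 pV _ vX]]]]; have sp := NA_star_seminorm H NAp.
  exists [:: p], (e - cdist p (v p) (eta (pc_rep X) p)); split; first lra.
  split=> [q [<-|[]] //|w hw wv]; exists X => //; exists p, e; split => //.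
  have := cdist_distD H sp (hw.1 p NAp) (hv.1 p NAp) (pcauchy_cst H sp (pc_rep X)).
  by have := wv p (or_introl erefl); lra.
move=> X; split=> [VX|[v [Xv [Y VY [p [e [NAp e_gt0 pV hv vY]]]]]]].
  have [N [e [[p NAp ->] e_gt0 pV]]] := seminorm_open_ball pc_seminorms_directed openV VX.
  exists (eta (pc_rep X)); split; first by rewrite pc_repE; apply: pc_class_eta.
  exists X => //; exists p, e; split => //.
  - by move=> Y hY; apply: pV; rewrite pc_seminorm_subE.
  - exact: eta_in_lim.
  - by rewrite (cdist_refl H (NA_star_seminorm H NAp)).
have [_ vX] : pc_class (pc_rep X) v by rewrite -pc_repE.
apply: pV; rewrite -(@cdist_pnull_l A H p (NA_star_seminorm H NAp) (v p) (pc_rep X) (pc_rep Y)) //.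
exact: vX.
Qed.

Lemma pc_openE V : pc_open V <-> seminorm_open (@pc_seminorms A) V.
Proof. by split; [apply: pc_open_seminorm|apply: seminorm_pc_open]. Qed.

Lemma pc_seminorms_star (N : PC A -> RR) : pc_seminorms N -> is_star_seminorm N.
Proof. by move=> [p hp ->]; apply: pc_seminorm_star_seminorm. Qed.

Lemma PC_tsa : is_tsa (PC A).
Proof.
exact: (@tsa_of_seminorm_topology _ (PC_star_alg H) (@pc_seminorms A) pc_seminorms_star pc_openE).
Qed.

Lemma pc_sball_open p X e : NA p -> pc_open (sball [:: pc_seminorm p] X e).
Proof.
move=> hp; apply/pc_openE; apply: (sball_open (PC_star_alg H) pc_seminorms_star).
by move=> N [<-|[]]; exists p.
Qed.

Lemma pc_sball_center p X e : NA p -> 0 < e -> sball [:: pc_seminorm p] X e X.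
Proof.
move=> hp; apply: (sball_center (PC_star_alg H) pc_seminorms_star).
by move=> N [<-|[]]; exists p.
Qed.

Lemma pc_seminorms_NA (N : PC A -> RR) : pc_seminorms N -> NA N.
Proof.
move=> hN; have sN := pc_seminorms_star hN; split.
  split; first exact: seminormD sN.
  split; first exact: seminormZ sN.
  split; first exact: seminormM sN.
  case: hN => p hp -> X; have [x ->] := alpha_surj X.
  by rewrite alpha_star // alphaM // !pc_seminorm_alpha //; case: hp => [[_ [_ [_ ->]]]].
apply: (seminorm_open_cont (PC_star_alg H) pc_seminorms_star) hN.
by move=> U /pc_openE.
Qed.

Lemma PC_in_PstarA : in_PstarA (PC A).
Proof.
split=> [X redX|U].
  move: redX; have [x ->] := alpha_surj X => redX.
  rewrite alpha0; apply/(alpha_eqP H) => p hp.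
  rewrite (rsub0 H) -(pc_seminorm_alpha x hp); apply: redX.
  exact: (pc_seminorms_NA (ex_intro2 _ _ p hp erefl)).
rewrite (star_open_generated (PC_star_alg H) pc_seminorms_NA pc_openE).
exact: pc_openE.
Qed.

Lemma cstar_K_alpha (S : A -> Prop) x : cstar S x <-> K_alpha S x.
Proof.
rewrite /K_alpha (closure_of_ext _ _ pc_openE).
rewrite (closure_directedP (PC_star_alg H) pc_seminorms_star _ _ pc_seminorms_directed).
rewrite cstarP //; split=> [clS N e [p hp ->] e_gt0|clS p e hp e_gt0].
  have [s Ss hs] := clS p e hp e_gt0.
  by exists (alpha s); [exists s|rewrite (pc_seminormB _ _ hp)].
have [X [s [Ss ->]] hs] := clS (pc_seminorm p) e (ex_intro2 _ _ p hp erefl) e_gt0.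
by exists s => //; rewrite (pc_seminormB _ _ hp) in hs.
Qed.

Lemma cstar_K_eta (S : A -> Prop) x : cstar S x <-> K_eta S x.
Proof.
rewrite cstarP //; split=> [clS|[_ clS] p e hp e_gt0].
  split=> [|U openU Ux]; first exact: eta_in_lim.
  have [ps [e [e_gt0 [NAps ballU]]]] := openU _ (eta_in_lim H x) Ux.
  have [q NAq q_dom] := NA_directed H TA NAps.
  have [s Ss hs] := clS q e NAq e_gt0.
  exists (eta s); split; first exact: eta_in_lim.
  split; last by split; [apply: eta_in_lim|exists s; split => //; apply: (lim_eq_refl H)].
  apply: ballU => [|p hp]; first exact: eta_in_lim.
  rewrite /eta cdist_cst.
  exact: le_lt_trans (q_dom p hp _) hs.
have NAp1 : forall q, List.In q [:: p] -> NA q by move=> q [<-|[]].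
have [v [hv [[_ vx] [_ [s [Ss vs]]]]]] :=
  clS _ (lball_open (e := e) H (eta_in_lim H x) NAp1) (lball_center H (eta_in_lim H x) e_gt0 NAp1).
exists s => //; have := vx p (or_introl erefl).
by rewrite /eta (cdist_pnull_l H (NA_star_seminorm H hp) _ (vs p hp)).
Qed.

Lemma alpha_injP : (forall x y, alpha x = alpha y -> x = y) <-> (forall x, reducing x -> x = rzero).
Proof.
split=> [inj x rx|red x y /(alpha_eqP H) rxy]; last by apply: (rsub_eq0 H); apply: red.
by apply: inj; apply/(alpha_eqP H); rewrite (rsub0 H).
Qed.

End PCTopology.

Lemma cstar_separatedP (A : raw) : is_star_alg A -> is_topology (@ropen A) ->
  cstar_separated A <-> (forall x : A, reducing x -> x = rzero).
Proof.
move=> H T; split=> [sepA x rx|red [x y]].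
  by apply: (sepA (x, rzero)).1; apply/cstar_diag => //; rewrite (rsub0 H).
rewrite cstar_diag //=; split=> [/red /(rsub_eq0 H) //|->].
by move=> p hp; rewrite (rsubrr H) (seminorm0 H (NA_star_seminorm H hp)).
Qed.

(** * Compactness *)

Lemma closure_snd (A B : raw) (S : prod_raw A B -> Prop) (a : A) (b : B) :
  is_topology (@ropen A) -> closure_of (@ropen (prod_raw A B)) S (a, b) ->
  closure_of (@ropen B) (fun b' => exists a', S (a', b')) b.
Proof.
move=> [openT _] clS V openV Vb.
have openW : @ropen (prod_raw A B) (fun z => V z.2).
  by move=> z Vz; exists (fun _ => True), V; do 4?split.
by have [[y1 y2] [Vy Sy]] := clS _ openW Vb; exists y2; split => //; exists y1.
Qed.

Lemma cstar_snd (A B : raw) (S : prod_raw A B -> Prop) (a : A) (b : B) :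
  is_tsa A -> is_tsa B -> cstar S ((a, b) : prod_raw A B) ->
  cstar (fun b' => exists a', S (a', b')) b.
Proof.
move=> hA hB; have [HA TA] := (tsa_star_alg hA, tsa_topology hA).
have [HB TB] := (tsa_star_alg hB, tsa_topology hB).
rewrite (cstarP _ _ (prod_star_alg HA HB) (prod_raw_topology TA TB)) cstarP //.
move=> clS q e hq e_gt0; have [w Sw hw] := clS _ e (NA_snd TA hq) e_gt0.
by exists w.2 => //; exists w.1; case: w Sw {hw}.
Qed.

Lemma cstar_compact_K_compact (A : raw) : is_tsa A -> cstar_compact A -> K_compact (PC A).
Proof.
move=> hA compA B hB [_ openB] S hS b; have [H TA] := (tsa_star_alg hA, tsa_topology hA).
have [HB TB] := (tsa_star_alg hB, tsa_topology hB).
split=> [[X clS]|clS]; first exact: closure_snd (tsa_topology (PC_tsa H TA)) clS.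
pose S' (w : prod_raw A B) := S ((alpha w.1, w.2) : prod_raw (PC A) B).
have hS' : is_ssub S'.
  exact: is_ssub_preimage (prod_map_star_hom (alpha_star_hom H) (id_star_hom B)) hS.
have clS' : cstar (fun b' => exists a, S' ((a, b') : prod_raw A B)) b.
  rewrite /cstar -(closure_of_ext _ _ openB); apply: closure_of_mono clS => y [X SXy].
  by exists (pc_rep X); rewrite /S' /= alpha_rep.
have [a clS'ab] := (compA B hB S' hS' b).2 clS'.
exists (alpha a) => W openW Wab; have [U [V [openU [openV [Ua [Vb UV]]]]]] := openW _ Wab.
have [N [e1 [[p hp ->] e1_gt0 pU]]] :=
  seminorm_open_ball (pc_seminorms_directed H TA) ((pc_openE H TA U).1 openU) Ua.
have [q [e2 [hq e2_gt0 qV]]] := seminorm_open_ball (NA_directed HB TB) ((openB V).1 openV) Vb.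
have e_gt0 : 0 < Order.min e1 e2 by rewrite lt_min e1_gt0 e2_gt0.
have [w S'w] := (cstarP _ _ (prod_star_alg H HB) (prod_raw_topology TA TB)).1 clS'ab _ _
  (NA_max_pair H HB TA TB hp hq) e_gt0.
rewrite gt_max !lt_min => /andP[/andP[pw _] /andP[_ qw]].
exists ((alpha w.1, w.2) : prod_raw (PC A) B); split => //; apply: UV.
  by apply: pU; rewrite (pc_seminormB H _ _ hp).
exact: qV.
Qed.

Lemma K_compact_cstar_compact (A : raw) : is_tsa A -> K_compact (PC A) -> cstar_compact A.
Proof.
move=> hA compPC B hB S hS b; have [H TA] := (tsa_star_alg hA, tsa_topology hA).
have [HB TB] := (tsa_star_alg hB, tsa_topology hB).
split=> [[a clSab]|clS]; first exact: cstar_snd clSab.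
pose S2 (Z : prod_raw (PC A) (PC B)) := exists2 w, S w & Z = (alpha w.1, alpha w.2).
have hS2 : is_ssub S2.
  exact: is_ssub_image (prod_map_star_hom (alpha_star_hom H) (alpha_star_hom HB)) hS.
have clS2 : closure_of (@ropen (PC B)) (fun Y => exists X, S2 ((X, Y) : prod_raw (PC A) (PC B)))
    (alpha b).
  apply/(closure_of_ext _ _ (pc_openE HB TB)).
  apply/(closure_directedP (PC_star_alg HB) (pc_seminorms_star HB) _ _
    (pc_seminorms_directed HB TB)).
  move=> _ e [p hp ->] e_gt0; have [b' [a Sab'] hb'] := (cstarP _ _ HB TB).1 clS p e hp e_gt0.
  by exists (alpha b'); [exists (alpha a), (a, b')|rewrite (pc_seminormB HB _ _ hp)].
have [X clS2X] := (compPC (PC B) (PC_tsa HB TB) (PC_in_PstarA HB TB) S2 hS2 (alpha b)).2 clS2.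
exists (pc_rep X); apply/(cstarP _ _ (prod_star_alg H HB) (prod_raw_topology TA TB)).
move=> q e hq e_gt0; have e2_gt0 : 0 < e / 2 by lra.
pose N1 := pc_seminorm (fun a => q ((a, rzero) : prod_raw A B)).
pose N2 := pc_seminorm (fun b => q ((rzero, b) : prod_raw A B)).
have [hN1 hN2] := (NA_inl HB hq, NA_inr H hq).
have openW : @ropen (prod_raw (PC A) (PC B))
    (fun Z => sball [:: N1] X (e / 2) Z.1 /\ sball [:: N2] (alpha b) (e / 2) Z.2).
  move=> Z [Z1 Z2]; exists (sball [:: N1] X (e / 2)), (sball [:: N2] (alpha b) (e / 2)).
  by do 4?split => //; apply: pc_sball_open.
have centre : sball [:: N1] X (e / 2) X /\ sball [:: N2] (alpha b) (e / 2) (alpha b).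
  by split; apply: pc_sball_center.
have [Z [[W1 W2] [w Sw eZ]]] := clS2X _ openW centre; rewrite eZ /= in W1 W2.
have sq := NA_star_seminorm (prod_star_alg H HB) hq.
exists w => //; apply: le_lt_trans (seminorm_pair_le H HB sq _ _) _.
have := W1 N1 (or_introl erefl); rewrite -{1}(alpha_rep X) /N1 (pc_seminormB H _ _ hN1) /=.
have := W2 N2 (or_introl erefl); rewrite /N2 (pc_seminormB HB _ _ hN2) /=.
lra.
Qed.

(** * Algebras of Cauchy families *)

Section CauchyAlgebra.
Variables (A : raw) (H : is_star_alg A) (p : A -> RR) (sp : is_star_seminorm p).
Implicit Types (u v : nat -> A).

Lemma pcauchy_cvgn u : pcauchy p u -> cvgn (fun n => p (u n)).
Proof.
move=> hu; apply: cvgn_cauchy => e /hu[N hN]; exists N => m n Nm Nn.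
exact: le_lt_trans (seminorm_dist_dist H sp _ _) (hN m n Nm Nn).
Qed.

Lemma pcauchy_bounded u : pcauchy p u -> exists2 M, 0 <= M & forall n, p (u n) <= M.
Proof.
move=> /pcauchy_cvgn hu; have [M [_ hM]] := @cvg_seq_bounded _ RR^o _ hu.
have bound n : p (u n) <= M + 1.
  by apply: le_trans (ler_norm _) _; apply: hM => //; rewrite ltrDl.
by exists (M + 1) => //; apply: le_trans (bound 0%N); apply: seminorm_ge0.
Qed.

Lemma pcauchyD u v : pcauchy p u -> pcauchy p v -> pcauchy p (fun n => radd (u n) (v n)).
Proof.
move=> hu hv e e_gt0; have e2_gt0 : 0 < e / 2 by lra.
have [N1 hN1] := hu _ e2_gt0; have [N2 hN2] := hv _ e2_gt0.
exists (maxn N1 N2) => m n; rewrite !geq_max => /andP[m1 m2] /andP[n1 n2].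
rewrite (rsubD H); apply: le_lt_trans (seminormD sp _ _) _.
by have := hN1 m n m1 n1; have := hN2 m n m2 n2; lra.
Qed.

Lemma pcauchyN u : pcauchy p u -> pcauchy p (fun n => ropp (u n)).
Proof.
move=> hu e /hu[N hN]; exists N => m n Nm Nn.
by rewrite (rsubN H) (seminormN H sp); apply: hN.
Qed.

Lemma pcauchy_star u : pcauchy p u -> pcauchy p (fun n => rstar (u n)).
Proof.
move=> hu e /hu[N hN]; exists N => m n Nm Nn.
by rewrite (rsub_star H) (seminorm_star sp); apply: hN.
Qed.

Lemma pcauchyZ l u : pcauchy p u -> pcauchy p (fun n => rscal l (u n)).
Proof.
move=> hu e e_gt0; have [d d_gt0 hd] := small_factor (cnorm_ge0 l) e_gt0.
have [N hN] := hu d d_gt0; exists N => m n Nm Nn; rewrite (rsubZ H) (seminormZ sp).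
have := hN m n Nm Nn; have := cnorm_ge0 l; have := seminorm_ge0 H sp (rsub (u m) (u n)).
by nra.
Qed.

Lemma pcauchyM u v : pcauchy p u -> pcauchy p v -> pcauchy p (fun n => rmul (u n) (v n)).
Proof.
move=> hu hv e e_gt0.
have [[Mu Mu_ge0 hMu] [Mv Mv_ge0 hMv]] := (pcauchy_bounded hu, pcauchy_bounded hv).
have [d d_gt0 hd] := small_factor (addr_ge0 Mu_ge0 Mv_ge0) e_gt0.
have [N1 hN1] := hu d d_gt0; have [N2 hN2] := hv d d_gt0.
exists (maxn N1 N2) => m n; rewrite !geq_max => /andP[m1 m2] /andP[n1 n2].
apply: le_lt_trans (seminorm_subM H sp _ _ _ _) _.
have := hN1 m n m1 n1; have := hN2 m n m2 n2; have := hMu n; have := hMv m.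
have := seminorm_ge0 H sp (rsub (u m) (u n)); have := seminorm_ge0 H sp (rsub (v m) (v n)).
have := seminorm_ge0 H sp (u n); have := seminorm_ge0 H sp (v m).
by nra.
Qed.

End CauchyAlgebra.

Definition cauchy_family (A : raw) (v : fam A) : Prop := forall p, NA p -> pcauchy p (v p).

Definition cauchy_fams (A : raw) := {v : fam A | cauchy_family v}.

Lemma cf_eq (A : raw) (u v : cauchy_fams A) : proj1_sig u = proj1_sig v -> u = v.
Proof. by case: u v => u hu [v hv] /= uv; apply: eq_exist. Qed.

Section CauchyFamilies.
Variables (A : raw) (H : is_star_alg A).
Implicit Types (u v : cauchy_fams A) (p : A -> RR).

Let sp p (hp : NA p) := NA_star_seminorm H hp.

Definition cf_zero : cauchy_fams A :=
  exist (@cauchy_family A) (eta rzero) (fun p hp => pcauchy_cst H (sp hp) rzero).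
Definition cf_add u v : cauchy_fams A :=
  exist (@cauchy_family A) (fun p n => radd (proj1_sig u p n) (proj1_sig v p n))
    (fun p hp => pcauchyD H (sp hp) (proj2_sig u p hp) (proj2_sig v p hp)).
Definition cf_opp u : cauchy_fams A :=
  exist (@cauchy_family A) (fun p n => ropp (proj1_sig u p n))
    (fun p hp => pcauchyN H (sp hp) (proj2_sig u p hp)).
Definition cf_scal l u : cauchy_fams A :=
  exist (@cauchy_family A) (fun p n => rscal l (proj1_sig u p n))
    (fun p hp => pcauchyZ H (sp hp) l (proj2_sig u p hp)).
Definition cf_mul u v : cauchy_fams A :=
  exist (@cauchy_family A) (fun p n => rmul (proj1_sig u p n) (proj1_sig v p n))
    (fun p hp => pcauchyM H (sp hp) (proj2_sig u p hp) (proj2_sig v p hp)).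
Definition cf_star u : cauchy_fams A :=
  exist (@cauchy_family A) (fun p n => rstar (proj1_sig u p n))
    (fun p hp => pcauchy_star H (sp hp) (proj2_sig u p hp)).
Definition cf_eta (x : A) : cauchy_fams A :=
  exist (@cauchy_family A) (eta x) (fun p hp => pcauchy_cst H (sp hp) x).

(* [CF_alg] only provides the algebra operations that [seminorm_open] needs to define
   the topology of [CF]. *)
Definition CF_alg : raw :=
  @Raw (cauchy_fams A) cf_zero cf_add cf_opp cf_scal cf_mul cf_star (fun _ => True).

Definition cf_seminorm p (v : cauchy_fams A) : RR := limn (fun n => p (proj1_sig v p n)).

Definition cf_seminorms (N : cauchy_fams A -> RR) : Prop := exists2 p, NA p & N = cf_seminorm p.

Definition CF : raw := @Raw (cauchy_fams A) cf_zero cf_add cf_opp cf_scal cf_mul cf_star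
  (@seminorm_open CF_alg cf_seminorms).

Lemma CF_star_alg : is_star_alg CF.
Proof.
split; first by move=> *; apply: cf_eq; do 2!apply: funext => ?; apply: raddA.
split; first by move=> *; apply: cf_eq; do 2!apply: funext => ?; apply: raddC.
split; first by move=> *; apply: cf_eq; do 2!apply: funext => ?; apply: radd0.
split; first by move=> *; apply: cf_eq; do 2!apply: funext => ?; apply: raddN.
split; first by move=> *; apply: cf_eq; do 2!apply: funext => ?; apply: rscalDr.
split; first by move=> *; apply: cf_eq; do 2!apply: funext => ?; apply: rscalDl.
split; first by move=> *; apply: cf_eq; do 2!apply: funext => ?; apply: rscalA.
split; first by move=> *; apply: cf_eq; do 2!apply: funext => ?; apply: rscal1.
split; first by move=> *; apply: cf_eq; do 2!apply: funext => ?; apply: rmulA.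
split; first by move=> *; apply: cf_eq; do 2!apply: funext => ?; apply: rmulDr.
split; first by move=> *; apply: cf_eq; do 2!apply: funext => ?; apply: rmulDl.
split; first by move=> *; apply: cf_eq; do 2!apply: funext => ?; apply: rscalAl.
split; first by move=> *; apply: cf_eq; do 2!apply: funext => ?; apply: rscalAr.
split; first by move=> *; apply: cf_eq; do 2!apply: funext => ?; apply: rstarK.
split; first by move=> *; apply: cf_eq; do 2!apply: funext => ?; apply: rstarD.
split; first by move=> *; apply: cf_eq; do 2!apply: funext => ?; apply: rstarZ.
by move=> *; apply: cf_eq; do 2!apply: funext => ?; apply: rstarM.
Qed.

Lemma cf_seminorm_cvg p v : NA p -> (fun n => p (proj1_sig v p n)) @ \oo --> cf_seminorm p v.
Proof. by move=> hp; apply: (pcauchy_cvgn H (sp hp) (proj2_sig v p hp)). Qed.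

Lemma cf_seminorm_star_seminorm p : NA p -> is_star_seminorm (A := CF) (cf_seminorm p).
Proof.
move=> hp; have cvg v := @cf_seminorm_cvg p v hp.
split; first by move=> u v; apply: (cvgn_le (N := 0%N) (cvg _) (cvgnD (cvg u) (cvg v))) => n _;
  apply: seminormD (sp hp) _ _.
split; first by move=> l u; apply: cvgn_lim; under eq_fun do rewrite /= (seminormZ (sp hp));
  apply: cvgnM (cvg_cst _) (cvg u).
split; first by move=> u v; apply: (cvgn_le (N := 0%N) (cvg _) (cvgnM (cvg u) (cvg v))) => n _;
  apply: seminormM (sp hp) _ _.
by move=> u; rewrite /cf_seminorm /=; under eq_fun do rewrite (seminorm_star (sp hp)).
Qed.

Lemma cf_seminorms_star N : cf_seminorms N -> is_star_seminorm (A := CF) N.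
Proof. by move=> [p hp ->]; apply: cf_seminorm_star_seminorm. Qed.

Lemma CF_tsa : is_tsa CF.
Proof. exact: (@tsa_of_seminorm_topology CF CF_star_alg cf_seminorms cf_seminorms_star). Qed.

Lemma cf_seminorm_NA p : NA p -> NA (A := CF) (cf_seminorm p).
Proof.
move=> hp; have sN := cf_seminorm_star_seminorm hp; split.
  split; first exact: seminormD sN.
  split; first exact: seminormZ sN.
  split; first exact: seminormM sN.
  move=> u; apply: cvgn_lim; rewrite expr2.
  under eq_fun do rewrite /= (proj2 (proj2 (proj2 (proj1 hp)))) expr2.
  exact: cvgnM (@cf_seminorm_cvg p u hp) (@cf_seminorm_cvg p u hp).
apply: (seminorm_open_cont CF_star_alg cf_seminorms_star) => //.
by exists p.
Qed.

Lemma cf_eta_star_hom : is_star_hom (cf_eta : A -> CF).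
Proof. by split=> *; apply: cf_eq. Qed.

End CauchyFamilies.

Section EtaSurjective.
Variables (A : raw) (hA : is_tsa A).
Let H := tsa_star_alg hA.
Let TA := tsa_topology hA.
Let HC := CF_star_alg H.
Let TC := tsa_topology (CF_tsa H).

Lemma cf_seminorm_eta_le (u : fam A) (hu : cauchy_family u) (p pt : A -> RR) (N : nat) (d : RR) :
  in_lim u -> NA p -> NA pt -> (forall x, p x <= pt x) ->
  (forall m n, (N <= m)%N -> (N <= n)%N -> pt (rsub (u pt m) (u pt n)) < d) ->
  cf_seminorm p (@rsub (CF H) (cf_eta H (u pt N)) (exist _ u hu)) <= d.
Proof.
move=> u_lim hp hpt p_le_pt hN; have sp := NA_star_seminorm H hp.
have compat := u_lim.2 p pt hp hpt p_le_pt.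
rewrite -[d]addr0.
apply: (cvgn_le (N := N) (@cf_seminorm_cvg A H p _ hp) (cvgnD (cvg_cst d) compat)) => n Nn /=.
apply: le_trans (seminorm_distD H sp _ (u pt n) _) _; apply: lerD.
  by apply: le_trans (p_le_pt _) (ltW (hN _ _ (leqnn N) Nn)).
by rewrite (seminorm_distC H sp).
Qed.

(* Compactness is applied to the graph of [cf_eta]: a compatible family lies in the
   c*-closure of the constant families, and any [a] with [(a, u)] in the closure of the
   graph satisfies [eta a = u] in the limit. *)
Lemma cstar_compact_eta_surjective : cstar_compact A -> eta_surjective A.
Proof.
move=> compA u hu; pose uh : CF H := exist _ u hu.1.
pose S (w : prod_raw A (CF H)) := w.2 = cf_eta H w.1.
have clS : cstar (fun v => exists a, S ((a, v) : prod_raw A (CF H))) uh.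
  apply/(cstarP _ _ HC TC) => q e hq e_gt0.
  have [Ns [d [d_gt0 cfNs qd]]] := cont_seminorm_bound HC (fun U openU => openU)
    (NA_star_seminorm HC hq) hq.2 e_gt0.
  have [ps NAps eNs] := list_preimage cfNs; subst Ns.
  have [pt hpt pt_dom] := NA_directed H TA NAps.
  have d2_gt0 : 0 < d / 2 by lra.
  have [N hN] := hu.1 pt hpt _ d2_gt0.
  exists (cf_eta H (u pt N)); first by exists (u pt N).
  apply: qd => _ /List.in_map_iff[p [<- hp]].
  apply: le_lt_trans (cf_seminorm_eta_le hu.1 hu (NAps p hp) hpt (pt_dom p hp) hN) _; lra.
have [a clSa] := (compA (CF H) (CF_tsa H) S (is_ssub_graph (cf_eta_star_hom H)) uh).2 clS.
exists a => p hp; have sp := NA_star_seminorm H hp.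
have dist_cvg := cdist_cvg H sp (hu.1 p hp) (pcauchy_cst H sp a).
suff L0 : cdist p (u p) (fun _ => a) = 0 by rewrite /pnull -L0.
apply/eqP; rewrite eq_le (cdist_ge0 H sp (hu.1 p hp) (pcauchy_cst H sp a)) andbT.
apply/ler_addgt0Pr => e e_gt0; have e2_gt0 : 0 < e / 2 by lra.
have [w Sw] := (cstarP _ _ (prod_star_alg H HC) (prod_raw_topology TA TC)).1 clSa _ _
  (NA_max_pair H HC TA TC hp (cf_seminorm_NA H hp)) e2_gt0.
rewrite gt_max => /andP[w1a w2u].
have w1a' : p (rsub w.1 a) < e / 2 := w1a.
have w2u' : cf_seminorm p (@rsub (CF H) (cf_eta H w.1) uh) < e / 2 by rewrite -Sw.
have : cdist p (u p) (fun _ => a) <=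
    cf_seminorm p (@rsub (CF H) (cf_eta H w.1) uh) + p (rsub w.1 a).
  apply: (cvgn_le (N := 0%N) dist_cvg (cvgnD (@cf_seminorm_cvg A H p _ hp) (cvg_cst _))) => n _.
  apply: le_trans (seminorm_distD H sp a w.1 (u p n)) _.
  by rewrite (seminorm_distC H sp (u p n) w.1).
lra.
Qed.

End EtaSurjective.

Close Scope ring_scope. Close Scope classical_set_scope. Unset Implicit Arguments.

Theorem theorem5p2 :
  (forall (A : raw), is_tsa A -> forall S : A -> Prop, is_ssub S ->
     (forall x : A, cstar S x <-> K_alpha S x) /\
     (forall x : A, cstar S x <-> K_eta S x)) /\
  (forall (A B : raw), is_tsa A -> is_tsa B ->
     forall (S : A -> Prop) (T : B -> Prop), is_ssub S -> is_ssub T ->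
     forall z : prod_raw A B,
       cstar (fun w : prod_raw A B => S w.1 /\ T w.2) z <->
       (cstar S z.1 /\ cstar T z.2)) /\
  (forall (A : raw), is_tsa A ->
     (cstar_separated A <-> (forall x y : A, alpha x = alpha y -> x = y)) /\
     ((forall x y : A, alpha x = alpha y -> x = y) <->
        (forall x : A, reducing x -> x = rzero))) /\
  (forall (A : raw), is_tsa A -> in_PstarA A -> cstar_separated A) /\
  (forall (A : raw), is_tsa A ->
     (cstar_compact A <-> K_compact (PC A)) /\
     (cstar_compact A -> eta_surjective A)).
Proof.
(* Parts (a) and (b) hold for arbitrary subsets, not only *-subalgebras. *)
split.
  move=> A [H [T _]] S _.
  by split=> x; [apply: cstar_K_alpha|apply: cstar_K_eta].
split.
  by move=> A B [HA [TA _]] [HB [TB _]] S T _ _ z; apply: cstarX.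
split.
  move=> A [H [T _]]; rewrite alpha_injP //; split=> //.
  exact: cstar_separatedP.
split.
  by move=> A [H [T _]] [reduced _]; apply/cstar_separatedP.
move=> A hA; split; last exact: cstar_compact_eta_surjective.
by split; [apply: cstar_compact_K_compact|apply: K_compact_cstar_compact].
Qed.
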